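(* For all $\theta,\hat\theta\in\Theta$, $k\in\mathbb N_+$, $\mu\in\mathcal M$, $T\ge2$, and the observation sequence $\{s_t,a_t\}_{t\in\mathbb Z}$ of any $\omega\in\Omega$: (1) for all $t\in[1:T]$, $$\|\gamma^\theta_{\mu,t|T}-\gamma^{\hat\theta}_{k,t}\|_{TV}\le\Big(1-\frac{\epsilon_b^2\zeta}{|\mathcal O|}\Big)^{t-1}+\Big(1-\frac{\epsilon_b^2\zeta}{|\mathcal O|}\Big)^{T-t}+\frac{2|\mathcal O|z_{\theta,\hat\theta}L_{\theta,\|\hat\theta-\theta\|_2}}{\epsilon_b^2\zeta}\|\hat\theta-\theta\|_2;$$ (2) for all $t\in[2:T]$, $$\|\tilde\gamma^\theta_{\mu,t|T}-\tilde\gamma^{\hat\theta}_{k,t}\|_{TV}\le2\Big(1-\frac{\epsilon_b^2\zeta}{|\mathcal O|}\Big)^{t-2}+\Big(1-\frac{\epsilon_b^2\zeta}{|\mathcal O|}\Big)^{T-t}+\frac{4|\mathcal O|z_{\theta,\hat\theta}L_{\theta,\|\hat\theta-\theta\|_2}}{\epsilon_b^2\zeta}\|\hat\theta-\theta\|_2.$$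
   Context: $\mathcal S,\mathcal A,\mathcal O$ are finite sets; $\Theta=\Theta_{hi}\times\Theta_{lo}\times\Theta_b$ is a convex compact subset of a Euclidean space. There are policies $\pi_{hi}(o\mid s;\theta_{hi})$ (distribution on $\mathcal O$), $\pi_{lo}(a\mid s,o;\theta_{lo})$ (distribution on $\mathcal A$), $\pi_b(b\mid s,o';\theta_b)$ (distribution on $\{0,1\}$), and environment kernel $P(s'\mid s,a)$. For fixed $\zeta\in(0,1)$, $\bar\pi_{hi}(o_t\mid s_t,o_{t-1},b_t;\theta_{hi})$ equals $\pi_{hi}(o_t\mid s_t;\theta_{hi})$ if $b_t=1$, $1-\zeta+\zeta/|\mathcal O|$ if $b_t=0,o_t=o_{t-1}$, $\zeta/|\mathcal O|$ if $b_t=0,o_t\ne o_{t-1}$. The options-with-failure process with parameter $\theta$: given $O_{t-1},S_t$, draw $B_t\sim\pi_b(\cdot\mid S_t,O_{t-1};\theta_b)$, $O_t\sim\bar\pi_{hi}(\cdot\mid S_t,O_{t-1},B_t;\theta_{hi})$, $A_t\sim\pi_{lo}(\cdot\mid S_t,O_t;\theta_{lo})$, $S_{t+1}\sim P(\cdot\mid S_t,A_t)$; $\mathbb P_{\theta,o_0,s_1}$ is the law of $(S_{2:T},A_{1:T},O_{1:T},B_{1:T})$ given $(O_0,S_1)=(o_0,s_1)$. Standing assumptions: (i) on an open $\tilde\Theta\supseteq\Theta$ the policies are defined, strictly positive and continuously differentiable in $\theta$; (ii) for a true parameter $\theta^*$, $\{(O_{t-1},S_t)\}_{t\ge1}$ is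 a Markov chain and $\nu^*$ is an extreme point of its set of stationary distributions. $\mathcal X=\mathcal S\times\mathcal A\times\mathcal O\times\{0,1\}$, $\Omega=\{\omega\in\mathcal X^{\mathbb Z}:P(\omega(s_{t+1})\mid\omega(s_t),\omega(a_t))>0\ \forall t\}$, $s_t=\omega(s_t),a_t=\omega(a_t)$. $\mathcal M$ = set of conditional pmfs $\mu(\cdot\mid s_1)$ on $\mathcal O$. Smoothing distributions (pmfs on $\mathcal O\times\{0,1\}$): $\gamma^\theta_{\mu,t|T}(o_t,b_t)\propto\mathbb E_{O_0\sim\mu(\cdot\mid s_1)}[\mathbb P_{\theta,O_0,s_1}(S_{2:T}=s_{2:T},A_{1:T}=a_{1:T},O_t=o_t,B_t=b_t)]$, $\tilde\gamma^\theta_{\mu,t|T}(o_{t-1},b_t)\propto\mathbb E_{O_0\sim\mu(\cdot\mid s_1)}[\mathbb P_{\theta,O_0,s_1}(S_{2:T}=s_{2:T},A_{1:T}=a_{1:T},O_{t-1}=o_{t-1},B_t=b_t)]$. For $k\in\mathbb N_+$, $\mathbb P_{\theta,k}$ is the law of the process with parameter $\theta$ over times $1-k,\dots,T+k$ with $(O_{-k},S_{1-k})\sim\nu^*$, and $\gamma^\theta_{k,t}(o_t,b_t)\propto\mathbb P_{\theta,k}(S_{1-k:T+k}=s_{1-k:T+k},A_{1-k:T+k}=a_{1-k:T+k},O_t=o_t,B_t=b_t)$, $\tilde\gamma^\theta_{k,t}(o_{t-1},b_t)\propto\mathbb P_{\theta,k}(S_{1-k:T+k}=s_{1-k:T+k},A_{1-k:T+k}=a_{1-k:T+k},O_{t-1}=o_{t-1},B_t=b_t)$.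 Constants: $\epsilon_b>0$ is a constant for which there is a conditional distribution $\bar\pi_{o,b}(o_t,b_t\mid s_t;\theta)$ on $\mathcal O\times\{0,1\}$ with $0<\epsilon_b\zeta\bar\pi_{o,b}(o_t,b_t\mid s_t;\theta)\le\pi_b(b_t\mid s_t,o_{t-1};\theta_b)\bar\pi_{hi}(o_t\mid s_t,o_{t-1},b_t;\theta_{hi})\le\epsilon_b^{-1}|\mathcal O|\bar\pi_{o,b}(o_t,b_t\mid s_t;\theta)$ for all $\theta\in\Theta$ and all arguments. With $h(\theta;o_{t-1},s_t,a_t,o_t,b_t)=\pi_b(b_t\mid s_t,o_{t-1};\theta_b)\bar\pi_{hi}(o_t\mid s_t,o_{t-1},b_t;\theta_{hi})\pi_{lo}(a_t\mid s_t,o_t;\theta_{lo})$: $L_{\theta,\delta}$ is the smallest $L$ such that for all arguments $\tilde\theta\mapsto h(\tilde\theta;\cdot)$ is $L$-Lipschitz on $\{\tilde\theta\in\Theta:\|\tilde\theta-\theta\|_2\le\delta\}$; and $z_{\theta,\hat\theta}=\max_{s',a'}\frac{[\max_{o,o',b}h(\theta;o,s',a',o',b)]\vee[\max_{o,o',b}h(\hat\theta;o,s',a',o',b)]}{[\min_{o,o',b}h(\theta;o,s',a',o',b)][\min_{o,o',b}h(\hat\theta;o,s',a',o',b)]}$. $\|\nu_1-\nu_2\|_{TV}=\frac12\sum|\nu_1-\nu_2|$. *)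

From HB Require Import structures.
From mathcomp Require Import all_boot all_order all_algebra.
From mathcomp Require Import all_classical all_reals all_analysis.
Set Implicit Arguments. Unset Strict Implicit. Unset Printing Implicit Defensive.
Import Order.TTheory GRing.Theory Num.Theory.
Import numFieldNormedType.Exports.
Local Open Scope classical_set_scope.
Local Open Scope ring_scope.

Section OptionsWithFailure.
Variables (R : realType) (S A O : finType) (nh nl nb : nat).

Definition param := ('rV[R]_nh * 'rV[R]_nl * 'rV[R]_nb)%type.
Definition th_hi (th : param) := th.1.1.
Definition th_lo (th : param) := th.1.2.
Definition th_b (th : param) := th.2.

Definition dist2 (th th' : param) : R :=
  Num.sqrt (\sum_(i < nh) (th.1.1 0 i - th'.1.1 0 i) ^+ 2
          + \sum_(i < nl) (th.1.2 0 i - th'.1.2 0 i) ^+ 2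
          + \sum_(i < nb) (th.2 0 i - th'.2 0 i) ^+ 2).

(* pihi th s o = pi_hi(o | s; th);  pilo th s o a = pi_lo(a | s,o; th);
   pib th s o' b = pi_b(b | s,o'; th);  P s a s' = P(s' | s,a) *)
Variables (pihi : 'rV[R]_nh -> S -> O -> R) (pilo : 'rV[R]_nl -> S -> O -> A -> R)
          (pib : 'rV[R]_nb -> S -> O -> bool -> R) (P : S -> A -> S -> R) (zeta : R).

Definition pibar_hi (thh : 'rV[R]_nh) (s : S) (oprev : O) (b : bool) (o : O) : R :=
  if b then pihi thh s o
  else if o == oprev then 1 - zeta + zeta / #|O|%:R else zeta / #|O|%:R.

Definition hfun (th : param) (oprev : O) (s : S) (a : A) (o : O) (b : bool) : R :=
  pib (th_b th) s oprev b * pibar_hi (th_hi th) s oprev b o * pilo (th_lo th) s o a.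

(* Unnormalised joint weight of a latent path over N steps at times t0,...,t0+N-1:
   o : index j <-> O_{t0-1+j} (j = 0..N);  b : index j <-> B_{t0+j} (j = 0..N-1);
   init o_{t0-1} is the (unnormalised) initial law of O_{t0-1} together with S_{t0}. *)
Definition wpath (th : param) (init : O -> R) (t0 : int) (N : nat)
  (s : int -> S) (a : int -> A) (o : {ffun 'I_N.+1 -> O}) (b : {ffun 'I_N -> bool}) : R :=
  init (o ord0)
  * (\prod_(j < N) hfun th (o (inord j)) (s (t0 + (j : nat)%:Z)) (a (t0 + (j : nat)%:Z))
                          (o (inord j.+1)) (b j))
  * (\prod_(j < N.-1) P (s (t0 + (j : nat)%:Z)) (a (t0 + (j : nat)%:Z))
                          (s (t0 + (j : nat)%:Z + 1))).

(* conditional law of (O_t, B_t) given the observations *)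
Definition smooth (th : param) (init : O -> R) (t0 : int) (N : nat)
  (s : int -> S) (a : int -> A) (t : int) (o' : O) (b' : bool) : R :=
  (\sum_(ob : {ffun 'I_N.+1 -> O} * {ffun 'I_N -> bool} |
          [forall j : 'I_N, (t0 + (j : nat)%:Z == t) ==>
                 ((ob.1 (inord j.+1) == o') && (ob.2 j == b'))])
      wpath th init t0 s a ob.1 ob.2)
  / (\sum_(ob : {ffun 'I_N.+1 -> O} * {ffun 'I_N -> bool}) wpath th init t0 s a ob.1 ob.2).

(* conditional law of (O_{t-1}, B_t) given the observations *)
Definition smooth_tilde (th : param) (init : O -> R) (t0 : int) (N : nat)
  (s : int -> S) (a : int -> A) (t : int) (o' : O) (b' : bool) : R :=
  (\sum_(ob : {ffun 'I_N.+1 -> O} * {ffun 'I_N -> bool} |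
          [forall j : 'I_N, (t0 + (j : nat)%:Z == t) ==>
                 ((ob.1 (inord j) == o') && (ob.2 j == b'))])
      wpath th init t0 s a ob.1 ob.2)
  / (\sum_(ob : {ffun 'I_N.+1 -> O} * {ffun 'I_N -> bool}) wpath th init t0 s a ob.1 ob.2).

(* gamma^th_{mu,t|T} and tilde version: times 1..T, O_0 ~ mu(. | s_1) *)
Definition gamma_mu (th : param) (mu : S -> O -> R) (T : nat) s a (t : int) :=
  smooth th (mu (s 1)) 1 T s a t.
Definition gammat_mu (th : param) (mu : S -> O -> R) (T : nat) s a (t : int) :=
  smooth_tilde th (mu (s 1)) 1 T s a t.

(* gamma^th_{k,t} and tilde version: times 1-k..T+k, (O_{-k}, S_{1-k}) ~ nu *)
Definition gamma_k (th : param) (nu : O -> S -> R) (k T : nat) s a (t : int) :=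
  smooth th (fun o => nu o (s (1 - k%:Z))) (1 - k%:Z) (T + 2 * k) s a t.
Definition gammat_k (th : param) (nu : O -> S -> R) (k T : nat) s a (t : int) :=
  smooth_tilde th (fun o => nu o (s (1 - k%:Z))) (1 - k%:Z) (T + 2 * k) s a t.

Definition tv (f g : O -> bool -> R) : R :=
  2^-1 * \sum_(x : O * bool) `|f x.1 x.2 - g x.1 x.2|.

Definition hmax (th : param) (s : S) (a : A) : R :=
  \big[Num.max/0]_(x : O * O * bool) hfun th x.1.1 s a x.1.2 x.2.
Definition hmin (th : param) (s : S) (a : A) : R :=
  \big[Num.min/hmax th s a]_(x : O * O * bool) hfun th x.1.1 s a x.1.2 x.2.

Definition zconst (th th' : param) : R :=
  \big[Num.max/0]_(x : S * A)
     (Num.max (hmax th x.1 x.2) (hmax th' x.1 x.2) / (hmin th x.1 x.2 * hmin th' x.1 x.2)).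

Variables (Th : set 'rV[R]_nh) (Tl : set 'rV[R]_nl) (Tb : set 'rV[R]_nb).
Definition inTheta (th : param) := Th th.1.1 /\ Tl th.1.2 /\ Tb th.2.

Definition lip_on (th : param) (d L : R) :=
  0 <= L /\
  forall (oprev : O) (s : S) (a : A) (o : O) (b : bool) (x y : param),
    inTheta x -> inTheta y -> dist2 x th <= d -> dist2 y th <= d ->
    `|hfun x oprev s a o b - hfun y oprev s a o b| <= L * dist2 x y.

Definition is_L_const (th : param) (d L : R) :=
  lip_on th d L /\ forall L', lip_on th d L' -> L <= L'.

Definition chain_kernel (th : param) (x y : O * S) : R :=
  \sum_(b : bool) \sum_(a : A) hfun th x.1 x.2 a y.1 b * P x.2 a y.2.

Definition stationary (th : param) (nu : O -> S -> R) :=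
  (forall o s, 0 <= nu o s) /\ \sum_(x : O * S) nu x.1 x.2 = 1 /\
  forall y : O * S, \sum_(x : O * S) nu x.1 x.2 * chain_kernel th x y = nu y.1 y.2.

Definition extreme_stationary (th : param) (nu : O -> S -> R) :=
  stationary th nu /\
  forall nu1 nu2 (l : R), stationary th nu1 -> stationary th nu2 -> 0 < l < 1 ->
    (forall o s, nu o s = l * nu1 o s + (1 - l) * nu2 o s) -> nu1 = nu2.

End OptionsWithFailure.

Definition C1_on (R : realType) (n : nat) (U : set 'rV[R]_n) (f : 'rV[R]_n -> R) :=
  forall i : 'I_n,
    (forall x, U x -> derivable f x (delta_mx 0 i)) /\
    (forall x, U x -> {for x, continuous (fun y => derive f y (delta_mx 0 i))}).

Definition convex_rv (R : realType) (n : nat) (C : set 'rV[R]_n) :=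
  forall x y (l : R), C x -> C y -> 0 <= l <= 1 -> C (l *: x + (1 - l) *: y).

(* Along a fixed observation sequence the options-with-failure chain is a
   time-inhomogeneous hidden chain on [O] with one-step weights [h] (the flag [B_t]
   rides along with the transition).  The constant [eps_b] makes every row of these
   weights comparable, up to the factor [c = eps_b^2 zeta / |O|], to one fixed row:
   a Doeblin condition.  Hence every forward or backward smoothing step contracts the
   l1 distance by [1 - c]; the initial law is forgotten at rate [(1 - c)^(t-1)] and the
   terminal law at rate [(1 - c)^(T-t)].  Replacing [theta'] by [theta] changes each
   one-step kernel by a relative error [e = z L |theta - theta'|].  Switching the
   kernels one time step at a time, each switch moves the smoothing law at time [t] by
   at most [2 e], damped by [(1 - c)] per step of distance to [t]; summing these two
   geometric series gives [2 e / c], and twice that for the pair [(O_(t-1), B_t)]. *)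

From HB Require Import structures.
From mathcomp Require Import all_boot all_order all_algebra.
From mathcomp Require Import all_classical all_reals all_analysis.
From mathcomp Require Import ring lra zify.
Set Implicit Arguments. Unset Strict Implicit. Unset Printing Implicit Defensive.
Import Order.TTheory GRing.Theory Num.Theory.
Local Open Scope ring_scope.

Section Inequalities.
Variable R : realFieldType.

Lemma sumr_mul_gt0 (I : finType) (f g : I -> R) :
  (forall i, 0 <= f i) -> 0 < \sum_i f i -> (forall i, 0 < g i) ->
  0 < \sum_i f i * g i.
Proof.
move=> f0 sf g0.
have [i /andP[_ fi]] : exists i, true && (0 < f i).
  by apply: (psumr_neq0P (fun i _ => f0 i)); apply/eqP; rewrite gt_eqF.
apply: lt_le_trans (mulr_gt0 fi (g0 i)) _.
rewrite (bigD1 i) //= lerDl; apply: sumr_ge0 => j _.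
by rewrite mulr_ge0 // ltW.
Qed.

Lemma eq_ler (x y : R) : x = y -> x <= y.
Proof. by move->. Qed.

Lemma sum_gt0_inhabited (I : finType) (f : I -> R) : 0 < \sum_i f i -> exists i : I, True.
Proof.
case: (pickP (fun _ : I => true)) => [i _|H]; first by exists i.
by rewrite big_pred0 ?ltxx.
Qed.

(* Dobrushin: split the kernel [V i j / r i] as [c nu j] plus a nonnegative
   remainder; the [c nu] part is killed by the zero-sum difference. *)
Lemma tv_contraction (I J : finType) (f f' r : I -> R) (V : I -> J -> R) (nu : J -> R) (c : R) :
  (forall i, r i = \sum_j V i j) -> (forall i, 0 < r i) ->
  (forall i j, c * r i * nu j <= V i j) ->
  0 < \sum_i f i * r i -> 0 < \sum_i f' i * r i ->
  \sum_j `|(\sum_i f i * V i j) / (\sum_i f i * r i)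
           - (\sum_i f' i * V i j) / (\sum_i f' i * r i)|
  <= (1 - c * \sum_j nu j) *
     \sum_i `|f i * r i / (\sum_i f i * r i) - f' i * r i / (\sum_i f' i * r i)|.
Proof.
move=> Hr rpos Hmin Zp Z'p.
set Z := \sum_i f i * r i; set Z' := \sum_i f' i * r i.
set D := fun i => f i * r i / Z - f' i * r i / Z'.
have D0 : \sum_i D i = 0.
  by rewrite sumrB -!mulr_suml -/Z -/Z' !divff ?subrr // gt_eqF.
set Q := fun i j => V i j / r i - c * nu j.
have Q0 i j : 0 <= Q i j by rewrite subr_ge0 ler_pdivlMr // mulrAC.
have QS i : \sum_j Q i j = 1 - c * \sum_j nu j.
  by rewrite sumrB -mulr_suml -Hr divff ?gt_eqF // mulr_sumr.
have DQ j : (\sum_i f i * V i j) / Z - (\sum_i f' i * V i j) / Z' = \sum_i D i * Q i j.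
  have -> : \sum_i D i * Q i j = \sum_i D i * (V i j / r i) - (\sum_i D i) * (c * nu j).
    by rewrite mulr_suml -sumrB; apply: eq_bigr => i _; rewrite mulrBr.
  rewrite D0 mul0r subr0 !mulr_suml -sumrB; apply: eq_bigr => i _.
  by rewrite /D; field; rewrite !gt_eqF.
under eq_bigr do rewrite DQ.
apply: le_trans (ler_sum _ (fun j _ => ler_norm_sum _ _ _)) _.
rewrite exchange_big /= mulrC mulr_suml; apply: ler_sum => i _.
under eq_bigr do rewrite normrM (ger0_norm (Q0 _ _)).
by rewrite -mulr_sumr QS.
Qed.

Lemma tv_contraction_sandwich (I J : finType) (f f' r g : I -> R) (W : I -> J -> R)
    (q : J -> R) (c : R) :
  0 <= c -> (forall j, 0 <= q j) -> 0 < \sum_j q j ->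
  (forall i, r i = \sum_j W i j) -> (forall i, 0 < r i) ->
  (forall i j, c * (g i * q j) <= W i j /\ W i j <= g i * q j) ->
  0 < \sum_i f i * r i -> 0 < \sum_i f' i * r i ->
  \sum_j `|(\sum_i f i * W i j) / (\sum_i f i * r i)
           - (\sum_i f' i * W i j) / (\sum_i f' i * r i)|
  <= (1 - c) *
     \sum_i `|f i * r i / (\sum_i f i * r i) - f' i * r i / (\sum_i f' i * r i)|.
Proof.
move=> c0 q0 Qp Hr rpos HW Zp Z'p.
set Q := \sum_j q j.
have minor i j : c * r i * (q j / Q) <= W i j.
  have rQ : r i <= g i * Q by rewrite Hr mulr_sumr; apply: ler_sum => j' _; case: (HW i j').
  apply: le_trans (proj1 (HW i j)).
  have -> : c * (g i * q j) = c * (g i * Q) * (q j / Q) by field; rewrite gt_eqF.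
  by apply: ler_wpM2r; rewrite ?divr_ge0 ?(ltW Qp) // ler_wpM2l.
have := tv_contraction Hr rpos minor Zp Z'p.
by rewrite -mulr_suml divff ?gt_eqF // mulr1.
Qed.

Lemma l1_normalize_le (I : finType) (w w' : I -> R) (rho kap : R) :
  (forall i, 0 <= w i) -> 0 < \sum_i w i -> 0 < kap ->
  (forall i, `|w' i - w i| <= rho * w i) -> (forall i, kap * w i <= w' i) ->
  \sum_i `|w i / (\sum_j w j) - w' i / (\sum_j w' j)| <= 2 * rho / kap.
Proof.
move=> w0 Wp kp Hr Hk.
set W := \sum_j w j; set W' := \sum_j w' j.
have W'k : kap * W <= W' by rewrite /W mulr_sumr; apply: ler_sum => i _.
have W'p : 0 < W' by apply: lt_le_trans W'k; rewrite mulr_gt0.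
have rho0 : 0 <= rho.
  have [i /andP[_ wi]] : exists i, true && (0 < w i).
    by apply: (psumr_neq0P (fun i _ => w0 i)); apply/eqP; rewrite gt_eqF.
  by rewrite -(pmulr_lge0 _ wi); apply: le_trans (Hr i).
have termwise i : `|w i / W - w' i / W'| <= 2 * rho * w i / W'.
  have -> : w i / W - w' i / W' = (\sum_j (w i * (w' j - w j) - (w' i - w i) * w j)) / (W * W').
    by rewrite sumrB -!mulr_sumr sumrB -/W -/W'; field; rewrite !gt_eqF.
  rewrite normrM (@gtr0_norm _ (W * W')^-1) ?invr_gt0 ?mulr_gt0 // ler_pdivrMr ?mulr_gt0 //.
  have -> : 2 * rho * w i / W' * (W * W') = \sum_j 2 * rho * w i * w j.
    by rewrite -mulr_sumr -/W; field; rewrite gt_eqF.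
  apply: le_trans (ler_norm_sum _ _ _) _; apply: ler_sum => j _.
  apply: le_trans (ler_normB _ _) _.
  rewrite !normrM (ger0_norm (w0 i)) (ger0_norm (w0 j)).
  have a1 : w i * `|w' j - w j| <= w i * (rho * w j) by apply: ler_wpM2l.
  have a2 : `|w' i - w i| * w j <= rho * w i * w j by apply: ler_wpM2r.
  lra.
apply: le_trans (ler_sum _ (fun i _ => termwise i)) _.
rewrite -mulr_suml -mulr_sumr -/W ler_pdivrMr //.
have -> : 2 * rho / kap * W' = 2 * rho * (W' / kap) by rewrite mulrAC -mulrA.
by apply: ler_wpM2l; rewrite ?mulr_ge0 // ler_pdivlMr // mulrC.
Qed.

Lemma geom_sum_le (x : R) (n : nat) : 0 <= x < 1 -> \sum_(i < n) x ^+ i <= (1 - x)^-1.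
Proof.
case/andP=> x0 x1; rewrite -[X in _ <= X]mul1r ler_pdivlMr ?subr_gt0 // mulrC.
have -> : (1 - x) * \sum_(i < n) x ^+ i = 1 - x ^+ n.
  by rewrite -opprB mulNr -subrX1 opprB.
by rewrite lerBlDr lerDl exprn_ge0.
Qed.

(* Step [m] links the indices [m] and [m+1]; [decay x m i] is [x] to the number of
   steps separating it from the index [i]. *)
Definition decay (x : R) (m i : nat) := if (m <= i)%N then x ^+ (i - m) else x ^+ (m - i.+1).

Lemma decay_ge0 (x : R) m i : 0 <= x -> 0 <= decay x m i.
Proof. by move=> x0; rewrite /decay; case: ifP; rewrite exprn_ge0. Qed.

Lemma decay_diag (x : R) m : decay x m m = 1.
Proof. by rewrite /decay leqnn subnn. Qed.

Lemma decay_pred (x : R) m i : (m < i)%N -> decay x m i.-1 = x ^+ (i - m.+1).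
Proof.
move=> mi; have i0 : (0 < i)%N by apply: leq_ltn_trans mi.
by rewrite /decay -ltnS prednK // mi -subn1 -subnDA add1n.
Qed.

Lemma sum_decay_le (x : R) (n i : nat) : 0 <= x < 1 -> (i < n)%N ->
  \sum_(m < n) decay x m i <= 2 / (1 - x).
Proof.
move=> hx iT; rewrite -(big_mkord xpredT (decay x ^~ i)) (big_cat_nat _ (n := i.+1)) //=.
have -> : \sum_(0 <= m < i.+1) decay x m i = \sum_(m < i.+1) x ^+ m.
  rewrite big_mkord (reindex_inj rev_ord_inj) /=; apply: eq_bigr => m _.
  by rewrite /decay /= subSS leq_subr subKn // -ltnS.
have -> : \sum_(i.+1 <= m < n) decay x m i = \sum_(m < n - i.+1) x ^+ m.
  rewrite -{1}[i.+1]add0n big_addn big_mkord; apply: eq_bigr => m _.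
  by rewrite /decay ifF ?addnK // addnS ltnNge leq_addl.
by rewrite mulr2n mulrDl mul1r; apply: lerD; apply: geom_sum_le.
Qed.

End Inequalities.

Section Kernels.
Variables (R : realFieldType) (O : finType).

(* [G t x y b] weighs the step [O_{t-1} = x] to [O_t = y] with flag [B_t = b]. *)
Definition kernel := int -> O -> O -> bool -> R.

Definition kstep (G : kernel) (t : int) (f : O -> R) : O -> R :=
  fun y => \sum_x \sum_b f x * G t x y b.

Fixpoint forward (G : kernel) (f : O -> R) (t0 : int) (n : nat) : O -> R :=
  if n is n'.+1 then forward G (kstep G t0 f) (t0 + 1) n' else f.

Fixpoint backward (G : kernel) (v : O -> R) (t1 : int) (n : nat) : O -> R :=
  if n is n'.+1 then fun x => \sum_y \sum_b G t1 x y b * backward G v (t1 + 1) n' y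
  else v.

Lemma addr1_natS (t : int) (m : nat) : t + 1 + m%:Z = t + m.+1%:Z.
Proof. by rewrite intS addrA. Qed.

Lemma forwardD G f t0 m n : forward G f t0 (m + n) = forward G (forward G f t0 m) (t0 + m%:Z) n.
Proof.
elim: m f t0 => [|m IH] f t0 /=; first by rewrite addr0.
by rewrite IH addr1_natS.
Qed.

Lemma backwardD G v t m n : backward G v t (m + n) = backward G (backward G v (t + m%:Z) n) t m.
Proof.
elim: m t => [|m IH] t /=; first by rewrite addr0.
by rewrite IH addr1_natS.
Qed.

Lemma sum_forward_backward G f v t m n :
  \sum_x forward G f t m x * backward G v (t + m%:Z) n x = \sum_x f x * backward G v t (m + n) x.
Proof.
elim: m f t => [|m IH] f t /=; first by rewrite addr0.
rewrite -addr1_natS IH /kstep.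
transitivity (\sum_y \sum_x \sum_b f x * G t x y b * backward G v (t + 1) (m + n) y).
  by apply: eq_bigr => y _; rewrite mulr_suml; apply: eq_bigr => x _; rewrite mulr_suml.
rewrite exchange_big; apply: eq_bigr => x _; rewrite mulr_sumr; apply: eq_bigr => y _.
by rewrite mulr_sumr; apply: eq_bigr => b _; rewrite mulrA.
Qed.

Lemma eq_forward G G' f t0 n :
  (forall k, (k < n)%N -> G (t0 + k%:Z) = G' (t0 + k%:Z)) -> forward G f t0 n = forward G' f t0 n.
Proof.
elim: n f t0 => [|n IH] f t0 eG //=.
have e0 : G t0 = G' t0 by have := eG 0%N erefl; rewrite addr0.
by rewrite /kstep e0 IH // => k kn; rewrite addr1_natS; apply: eG.
Qed.

Lemma eq_backward G G' v t n :
  (forall k, (k < n)%N -> G (t + k%:Z) = G' (t + k%:Z)) -> backward G v t n = backward G' v t n.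
Proof.
elim: n t => [|n IH] t eG //=.
have -> : G t = G' t by have := eG 0%N erefl; rewrite addr0.
by rewrite IH // => k kn; rewrite addr1_natS; apply: eG.
Qed.

Definition kernel_pos (G : kernel) := forall t x y b, 0 < G t x y b.

Section Positivity.
Variable G : kernel.
Hypothesis Gpos : kernel_pos G.

Lemma kstep_ge0 t f y : (forall x, 0 <= f x) -> 0 <= kstep G t f y.
Proof.
move=> f0; apply: sumr_ge0 => x _; apply: sumr_ge0 => b _.
by rewrite mulr_ge0 // ltW.
Qed.

Lemma kstep_gt0 t f y : (forall x, 0 <= f x) -> 0 < \sum_x f x -> 0 < kstep G t f y.
Proof.
move=> f0 fp; rewrite /kstep; under eq_bigr do rewrite -mulr_sumr.
by apply: sumr_mul_gt0 => // x; rewrite big_bool addr_gt0.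
Qed.

Lemma sum_pos_gt0 (f : O -> R) : (forall x, 0 < f x) -> (exists x : O, True) -> 0 < \sum_x f x.
Proof.
move=> fp [x _]; apply: lt_le_trans (fp x) _.
by rewrite (bigD1 x) //= lerDl; apply: sumr_ge0 => y _; apply: ltW.
Qed.

Lemma forward_ge0 f t n : (forall x, 0 <= f x) -> forall x, 0 <= forward G f t n x.
Proof. by elim: n f t => [|n IH] f t f0 x //=; apply: IH => y; apply: kstep_ge0. Qed.

Lemma forward_sum_gt0 f t n : (forall x, 0 <= f x) -> 0 < \sum_x f x ->
  0 < \sum_x forward G f t n x.
Proof.
elim: n f t => [|n IH] f t f0 fp //=.
have [x _] := sum_gt0_inhabited fp.
apply: IH; first by move=> y; apply: kstep_ge0.
by apply: sum_pos_gt0 => [y|]; [apply: kstep_gt0 | exists x].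
Qed.

Lemma forward_gt0 f t n : (forall x, 0 <= f x) -> 0 < \sum_x f x ->
  forall x, 0 < forward G f t n.+1 x.
Proof.
move=> f0 fp x /=.
have gen g t' m : (forall y, 0 < g y) -> 0 < forward G g t' m x.
  elim: m g t' => [|m IH] g t' gp //=; apply: IH => y.
  by apply: kstep_gt0 => [z|]; [exact: ltW | apply: sum_pos_gt0 => //; exists x].
by apply: gen => y; apply: kstep_gt0.
Qed.

Lemma backward_gt0 v t n : (forall x, 0 < v x) -> forall x, 0 < backward G v t n x.
Proof.
elim: n v t => [|n IH] v t vp x //=.
apply: sum_pos_gt0 => [y|]; last by exists x.
by rewrite big_bool addr_gt0 ?mulr_gt0 ?IH.
Qed.

End Positivity.
End Kernels.

Section Smoother.
Variables (R : realFieldType) (O : finType) (T : nat) (c : R).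
Hypothesis c_gt0 : 0 < c.

Record chain := Chain { ker : kernel R O; init : O -> R; term : O -> R }.

(* Time runs over [1..T]: [alpha S j] is the forward message of [O_j], and step [i]
   goes from [O_i] to [O_(i+1)] with flag [B_(i+1)] under [ker S (i+1)].  Thus
   [post_next S i] is the law of [(O_(i+1), B_(i+1))] and [post_prev S i] that of
   [(O_i, B_(i+1))]. *)
Definition alpha S j := forward (ker S) (init S) 1 j.
Definition beta S j := backward (ker S) (term S) j.+1%:Z (T - j).
Definition norm_const S := \sum_x alpha S 0 x * beta S 0 x.
Definition pair_weight S i x y b := alpha S i x * ker S i.+1%:Z x y b * beta S i.+1 y.
Definition post_state S j x := alpha S j x * beta S j x / norm_const S.
Definition post_next S i y b := (\sum_x pair_weight S i x y b) / norm_const S.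
Definition post_prev S i x b := (\sum_y pair_weight S i x y b) / norm_const S.

Definition l1 (f g : O -> bool -> R) := \sum_y \sum_b `|f y b - g y b|.
Definition dist_state S S' j := \sum_x `|post_state S j x - post_state S' j x|.
Definition dist_pair S S' i := \sum_x \sum_y \sum_b
  `|pair_weight S i x y b / norm_const S - pair_weight S' i x y b / norm_const S'|.

Definition doeblin (G : kernel R O) := forall t, exists q : O -> bool -> R,
  (forall y b, 0 < q y b) /\ forall x y b, c * q y b <= G t x y b /\ G t x y b <= q y b.

Definition admissible S := [/\ forall x, 0 <= init S x, 0 < \sum_x init S x,
  forall x, 0 < term S x & doeblin (ker S)].

Lemma doeblin_pos G : doeblin G -> kernel_pos G.
Proof.
move=> HG t x y b; have [q [qp /(_ x y b)[+ _]]] := HG t.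
by apply: lt_le_trans; rewrite mulr_gt0.
Qed.

Lemma l1_triangle f g h : l1 f h <= l1 f g + l1 g h.
Proof.
rewrite /l1 -big_split; apply: ler_sum => y _; rewrite -big_split; apply: ler_sum => b _.
by rewrite -(subrKA (g y b)) ler_normD.
Qed.

Lemma l1_refl f : l1 f f = 0.
Proof. by rewrite /l1 big1 // => y _; rewrite big1 // => b _; rewrite subrr normr0. Qed.

Lemma sum_pair (F : O * bool -> R) : \sum_p F p = \sum_y \sum_b F (y, b).
Proof. by rewrite (pair_bigA _ (fun y b => F (y, b))); apply: eq_bigr => -[]. Qed.

Lemma sum_triple (F : O * O * bool -> R) : \sum_p F p = \sum_x \sum_y \sum_b F (x, y, b).
Proof.
rewrite (pair_bigA _ (fun x y => \sum_b F (x, y, b))).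
by rewrite (pair_bigA _ (fun xy b => F (xy.1, xy.2, b))); apply: eq_bigr => -[[]].
Qed.

Lemma alphaS S j : alpha S j.+1 = kstep (ker S) j.+1%:Z (alpha S j).
Proof. by rewrite /alpha -[in LHS]addn1 forwardD intS. Qed.

Lemma betaE S j x : (j < T)%N ->
  beta S j x = \sum_y \sum_b ker S j.+1%:Z x y b * beta S j.+1 y.
Proof. by move=> jT; rewrite /beta -(subnSK jT) /= [j.+2%:Z]intS addrC. Qed.

Lemma sum_alpha_beta S j : (j <= T)%N -> \sum_x alpha S j x * beta S j x = norm_const S.
Proof.
move=> jT; rewrite /norm_const /alpha /beta.
by rewrite intS sum_forward_backward subnKC ?subn0.
Qed.

Lemma post_stateS_pair S i y :
  post_state S i.+1 y = (\sum_x \sum_b pair_weight S i x y b) / norm_const S.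
Proof.
rewrite /post_state alphaS /kstep mulr_suml; congr (_ / _).
by apply: eq_bigr => x _; rewrite mulr_suml.
Qed.

Lemma dist_stateS_le_l1_next S S' i :
  dist_state S S' i.+1 <= l1 (post_next S i) (post_next S' i).
Proof.
apply: ler_sum => y _.
have E S0 : post_state S0 i.+1 y = \sum_b post_next S0 i y b.
  by rewrite post_stateS_pair exchange_big mulr_suml.
by rewrite !E -sumrB ler_norm_sum.
Qed.

Section Admissible.
Variable S : chain.
Hypothesis VS : admissible S.

Lemma ker_pos : kernel_pos (ker S).
Proof. by case: VS => _ _ _ /doeblin_pos. Qed.

Lemma alpha_ge0 j x : 0 <= alpha S j x.
Proof. by case: VS => u0 _ _ _; apply: forward_ge0 => //; apply: ker_pos. Qed.

Lemma alpha_sum_gt0 j : 0 < \sum_x alpha S j x.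
Proof. by case: VS => u0 up _ _; apply: forward_sum_gt0 => //; apply: ker_pos. Qed.

Lemma alphaS_gt0 j x : 0 < alpha S j.+1 x.
Proof. by case: VS => u0 up _ _; apply: forward_gt0 => //; apply: ker_pos. Qed.

Lemma beta_gt0 j x : 0 < beta S j x.
Proof. by case: VS => _ _ vp _; apply: backward_gt0 => //; apply: ker_pos. Qed.

Lemma norm_const_gt0 : 0 < norm_const S.
Proof. by apply: sumr_mul_gt0; [apply: alpha_ge0 | apply: alpha_sum_gt0 | apply: beta_gt0]. Qed.

Lemma pair_weight_ge0 i x y b : 0 <= pair_weight S i x y b.
Proof. by rewrite !mulr_ge0 ?alpha_ge0 // ltW ?beta_gt0 ?ker_pos. Qed.

Lemma post_state_ge0 j x : 0 <= post_state S j x.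
Proof. by rewrite divr_ge0 ?mulr_ge0 ?alpha_ge0 // ltW ?beta_gt0 ?norm_const_gt0. Qed.

Lemma sum_post_state j : (j <= T)%N -> \sum_x post_state S j x = 1.
Proof. by move=> jT; rewrite -mulr_suml sum_alpha_beta // divff // gt_eqF // norm_const_gt0. Qed.

Lemma post_state_pair i x : (i < T)%N ->
  post_state S i x = (\sum_y \sum_b pair_weight S i x y b) / norm_const S.
Proof.
move=> iT; rewrite /post_state betaE // mulr_sumr; congr (_ / _).
by apply: eq_bigr => y _; rewrite mulr_sumr; apply: eq_bigr => b _; rewrite mulrA.
Qed.

Lemma sum_pair_weight i : (i < T)%N -> \sum_x \sum_y \sum_b pair_weight S i x y b = norm_const S.
Proof.
move=> iT; rewrite -(sum_alpha_beta S (ltnW iT)); apply: eq_bigr => x _.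
rewrite betaE // mulr_sumr; apply: eq_bigr => y _.
by rewrite mulr_sumr; apply: eq_bigr => b _; rewrite mulrA.
Qed.

End Admissible.

Lemma dist_state_le2 S S' j : admissible S -> admissible S' -> (j <= T)%N ->
  dist_state S S' j <= 2.
Proof.
move=> VS VS' jT; apply: le_trans (ler_sum _ (fun x _ => ler_normB _ _)) _.
rewrite big_split /=.
under eq_bigr do rewrite ger0_norm ?(post_state_ge0 VS) //.
under [X in _ + X <= _]eq_bigr do rewrite ger0_norm ?(post_state_ge0 VS') //.
by rewrite (sum_post_state VS) ?(sum_post_state VS').
Qed.

Section TwoChains.
Variables S S' : chain.
Hypotheses (VS : admissible S) (VS' : admissible S').
Variable i : nat.
Hypothesis iT : (i < T)%N.

Lemma dist_state_le_pair : dist_state S S' i <= dist_pair S S' i.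
Proof.
apply: ler_sum => x _; rewrite !post_state_pair // !mulr_suml -sumrB.
apply: le_trans (ler_norm_sum _ _ _) _; apply: ler_sum => y _.
by rewrite !mulr_suml -sumrB ler_norm_sum.
Qed.

Lemma dist_stateS_le_pair : dist_state S S' i.+1 <= dist_pair S S' i.
Proof.
rewrite /dist_pair exchange_big /=; apply: ler_sum => y _.
rewrite !post_stateS_pair !mulr_suml -sumrB.
apply: le_trans (ler_norm_sum _ _ _) _; apply: ler_sum => x _.
by rewrite !mulr_suml -sumrB ler_norm_sum.
Qed.

Lemma l1_next_le_pair : l1 (post_next S i) (post_next S' i) <= dist_pair S S' i.
Proof.
rewrite /dist_pair exchange_big /=; apply: ler_sum => y _.
rewrite exchange_big /=; apply: ler_sum => b _.
by rewrite /post_next !mulr_suml -sumrB ler_norm_sum.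
Qed.

Lemma l1_prev_le_pair : l1 (post_prev S i) (post_prev S' i) <= dist_pair S S' i.
Proof.
apply: ler_sum => x _; rewrite exchange_big /=; apply: ler_sum => b _.
by rewrite /post_prev !mulr_suml -sumrB ler_norm_sum.
Qed.

Lemma forward_contraction : ker S i.+1%:Z = ker S' i.+1%:Z -> beta S i.+1 = beta S' i.+1 ->
  l1 (post_next S i) (post_next S' i) <= (1 - c) * dist_state S S' i.
Proof.
move=> eG eB; have [_ _ _ /(_ i.+1%:Z)[q [qp Hq]]] := VS.
set G := ker S i.+1%:Z; set B := beta S i.+1.
have Bp y : 0 < B y := beta_gt0 VS i.+1 y.
have hr x : beta S i x = \sum_(p : O * bool) G x p.1 p.2 * B p.1 by rewrite betaE // sum_pair.
have hr' x : beta S' i x = beta S i x by rewrite !betaE // -eG -eB.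
have Z1 : \sum_x alpha S i x * beta S i x = norm_const S by rewrite sum_alpha_beta // ltnW.
have Z2 : \sum_x alpha S' i x * beta S i x = norm_const S'.
  by under eq_bigr do rewrite -hr'; rewrite sum_alpha_beta // ltnW.
have qB0 p : 0 <= q p.1 p.2 * B p.1 by rewrite mulr_ge0 // ltW.
have qBp : 0 < \sum_(p : O * bool) q p.1 p.2 * B p.1.
  apply: sum_pos_gt0 => [p|]; first by rewrite mulr_gt0.
  by have [x _] := sum_gt0_inhabited (alpha_sum_gt0 VS 0); exists (x, true).
have sandwich x p : c * (1 * (q p.1 p.2 * B p.1)) <= G x p.1 p.2 * B p.1 /\
                    G x p.1 p.2 * B p.1 <= 1 * (q p.1 p.2 * B p.1).
  by rewrite !mul1r mulrA !ler_pM2r //; case: (Hq x p.1 p.2).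
have := @tv_contraction_sandwich _ _ _ (alpha S i) (alpha S' i) (beta S i) (fun=> 1)
  (fun x p => G x p.1 p.2 * B p.1) (fun p => q p.1 p.2 * B p.1) c
  (ltW c_gt0) qB0 qBp hr (beta_gt0 VS i) sandwich.
rewrite Z1 Z2 sum_pair => /(_ (norm_const_gt0 VS) (norm_const_gt0 VS')) key.
apply: le_trans (le_trans key _).
  apply: ler_sum => y _; apply: ler_sum => b _; rewrite /post_next /pair_weight -eG -eB.
  by apply eq_ler; congr `|_ / _ - _ / _|; apply: eq_bigr => x _; rewrite mulrA.
rewrite /dist_state /post_state; apply eq_ler; congr (_ * _).
by apply: eq_bigr => x _; rewrite hr'.
Qed.

Lemma backward_contraction : ker S i.+1%:Z = ker S' i.+1%:Z -> alpha S i = alpha S' i ->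
  dist_state S S' i <= (1 - c) * dist_state S S' i.+1.
Proof.
move=> eG eA; have [_ _ _ /(_ i.+1%:Z)[q [qp Hq]]] := VS.
set G := ker S i.+1%:Z; set A := alpha S i.
have hr y : alpha S i.+1 y = \sum_x A x * \sum_b G x y b.
  by rewrite alphaS; apply: eq_bigr => x _; rewrite mulr_sumr.
have hr' y : alpha S' i.+1 y = alpha S i.+1 y by rewrite !alphaS /kstep -eG -eA.
have sandwich y x : c * ((\sum_b q y b) * A x) <= A x * \sum_b G x y b /\
                    A x * \sum_b G x y b <= (\sum_b q y b) * A x.
  rewrite [(\sum_b q y b) * A x]mulrC mulrCA.
  split; apply: ler_wpM2l; rewrite ?alpha_ge0 ?mulr_sumr //; apply: ler_sum => b _;
    by case: (Hq x y b).
have Z1 : \sum_y beta S i.+1 y * alpha S i.+1 y = norm_const S.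
  by rewrite -(sum_alpha_beta S iT); apply: eq_bigr => y _; rewrite mulrC.
have Z2 : \sum_y beta S' i.+1 y * alpha S i.+1 y = norm_const S'.
  by rewrite -(sum_alpha_beta S' iT); apply: eq_bigr => y _; rewrite mulrC hr'.
have := @tv_contraction_sandwich _ _ _ (beta S i.+1) (beta S' i.+1) (alpha S i.+1)
  (fun y => \sum_b q y b) (fun y x => A x * \sum_b G x y b) A c
  (ltW c_gt0) (alpha_ge0 VS i) (alpha_sum_gt0 VS i) hr (alphaS_gt0 VS i) sandwich.
rewrite Z1 Z2 => /(_ (norm_const_gt0 VS) (norm_const_gt0 VS')) key.
have E S0 : ker S0 i.+1%:Z = G -> alpha S0 i = A -> forall x,
    \sum_y beta S0 i.+1 y * (A x * \sum_b G x y b) = alpha S0 i x * beta S0 i x.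
  move=> eG0 eA0 x; rewrite betaE // eG0 eA0 mulr_sumr; apply: eq_bigr => y _.
  by rewrite -mulr_suml; ring.
apply: le_trans (le_trans key _).
  apply: ler_sum => x _; rewrite /post_state E // E //.
rewrite /dist_state /post_state; under [X in _ <= _ * X]eq_bigr do rewrite hr'.
apply eq_ler; congr (_ * _); apply: eq_bigr => y _.
by rewrite [beta S _ _ * _]mulrC [beta S' _ _ * _]mulrC.
Qed.

Lemma dist_pair_le_state : ker S i.+1%:Z = ker S' i.+1%:Z -> beta S i.+1 = beta S' i.+1 ->
  dist_pair S S' i <= dist_state S S' i.
Proof.
move=> eG eB; apply: ler_sum => x _.
set D := alpha S i x / norm_const S - alpha S' i x / norm_const S'.
have E : \sum_y \sum_b
      `|pair_weight S i x y b / norm_const S - pair_weight S' i x y b / norm_const S'|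
    = `|D| * beta S i x.
  rewrite betaE // mulr_sumr; apply: eq_bigr => y _; rewrite mulr_sumr; apply: eq_bigr => b _.
  have -> : pair_weight S i x y b / norm_const S - pair_weight S' i x y b / norm_const S'
      = D * (ker S i.+1%:Z x y b * beta S i.+1 y) by rewrite /D /pair_weight -eG -eB; ring.
  by rewrite normrM (ger0_norm (x := _ * _)) // mulr_ge0 // ltW ?(beta_gt0 VS) ?(ker_pos VS).
rewrite E /post_state.
have -> : beta S' i x = beta S i x by rewrite !betaE // -eG -eB.
rewrite (_ : _ - _ = D * beta S i x); last by rewrite /D; ring.
by rewrite normrM (gtr0_norm (beta_gt0 VS i x)).
Qed.

Lemma dist_pair_le_stateS : ker S i.+1%:Z = ker S' i.+1%:Z -> alpha S i = alpha S' i ->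
  dist_pair S S' i <= dist_state S S' i.+1.
Proof.
move=> eG eA; rewrite /dist_pair exchange_big /=; apply: ler_sum => y _.
set D := beta S i.+1 y / norm_const S - beta S' i.+1 y / norm_const S'.
have E : \sum_x \sum_b
      `|pair_weight S i x y b / norm_const S - pair_weight S' i x y b / norm_const S'|
    = alpha S i.+1 y * `|D|.
  rewrite alphaS mulr_suml; apply: eq_bigr => x _; rewrite mulr_suml; apply: eq_bigr => b _.
  have -> : pair_weight S i x y b / norm_const S - pair_weight S' i x y b / norm_const S'
      = alpha S i x * ker S i.+1%:Z x y b * D by rewrite /D /pair_weight -eG -eA; ring.
  by rewrite normrM (ger0_norm (x := _ * _)) // mulr_ge0 ?(alpha_ge0 VS) // ltW ?(ker_pos VS).
rewrite E /post_state.
have -> : alpha S' i.+1 y = alpha S i.+1 y by rewrite !alphaS /kstep -eG -eA.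
rewrite (_ : _ - _ = alpha S i.+1 y * D); last by rewrite /D; ring.
by rewrite normrM (gtr0_norm (alphaS_gt0 VS i y)).
Qed.

Lemma dist_pair_perturb (rho kap : R) : alpha S i = alpha S' i -> beta S i.+1 = beta S' i.+1 ->
  0 < kap ->
  (forall x y b, `|ker S' i.+1%:Z x y b - ker S i.+1%:Z x y b| <= rho * ker S i.+1%:Z x y b) ->
  (forall x y b, kap * ker S i.+1%:Z x y b <= ker S' i.+1%:Z x y b) ->
  dist_pair S S' i <= 2 * rho / kap.
Proof.
move=> eA eB kp Hr Hk.
have ab0 x y : 0 <= alpha S i x * beta S i.+1 y.
  by rewrite mulr_ge0 ?(alpha_ge0 VS) // ltW ?(beta_gt0 VS).
have wE x y b : pair_weight S i x y b = alpha S i x * beta S i.+1 y * ker S i.+1%:Z x y b.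
  by rewrite /pair_weight; ring.
have w'E x y b : pair_weight S' i x y b = alpha S i x * beta S i.+1 y * ker S' i.+1%:Z x y b.
  by rewrite /pair_weight -eA -eB; ring.
have := @l1_normalize_le _ _ (fun p => pair_weight S i p.1.1 p.1.2 p.2)
  (fun p => pair_weight S' i p.1.1 p.1.2 p.2) rho kap.
rewrite !sum_triple /= !sum_pair_weight //; apply => //.
- by move=> p; apply: pair_weight_ge0.
- exact: norm_const_gt0.
- move=> [[x y] b] /=; rewrite w'E wE -mulrBr normrM (ger0_norm (ab0 x y)) mulrCA.
  exact: ler_wpM2l.
- by move=> [[x y] b] /=; rewrite w'E wE mulrCA; apply: ler_wpM2l.
Qed.

End TwoChains.

Lemma doeblin_le1 G (o : O) : doeblin G -> c <= 1.
Proof.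
move=> DG; have [q [qp /(_ o o true)[lo hi]]] := DG 0.
by rewrite -(ler_pM2r (qp o true)) mul1r (le_trans lo hi).
Qed.

Hypothesis c_le1 : c <= 1.

Lemma subr1c_ge0 : 0 <= 1 - c.
Proof. by rewrite subr_ge0. Qed.

Lemma subr1c_le1 : 1 - c <= 1.
Proof. by rewrite lerBlDr lerDl ltW. Qed.

Lemma dist_state_ge0 S S' j : 0 <= dist_state S S' j.
Proof. by apply: sumr_ge0 => x _. Qed.

Section ForgetInit.
Variables S S' : chain.
Hypotheses (VS : admissible S) (VS' : admissible S').
Hypotheses (eG : ker S = ker S') (eV : term S = term S').

Let ker_same t : ker S t = ker S' t. Proof. by rewrite eG. Qed.

Lemma beta_same j : beta S j = beta S' j.
Proof. by rewrite /beta eG eV. Qed.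

Lemma dist_state_forget_init j : (j <= T)%N -> dist_state S S' j <= 2 * (1 - c) ^+ j.
Proof.
elim: j => [|j IH] jT; first by rewrite expr0 mulr1 dist_state_le2.
apply: le_trans (dist_stateS_le_l1_next _ _ _) _.
apply: le_trans (forward_contraction VS VS' jT (ker_same _) (beta_same _)) _.
by rewrite exprS mulrCA ler_wpM2l ?subr1c_ge0 // IH // ltnW.
Qed.

Lemma l1_next_forget_init i : (i < T)%N -> l1 (post_next S i) (post_next S' i) <= 2 * (1 - c) ^+ i.
Proof.
move=> iT; apply: le_trans (forward_contraction VS VS' iT (ker_same _) (beta_same _)) _.
exact: le_trans (ler_piMl (dist_state_ge0 _ _ _) subr1c_le1) (dist_state_forget_init (ltnW iT)).
Qed.

Lemma l1_prev_forget_init i : (i < T)%N -> l1 (post_prev S i) (post_prev S' i) <= 2 * (1 - c) ^+ i.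
Proof.
move=> iT; apply: le_trans (l1_prev_le_pair S S' i) _.
apply: le_trans (dist_pair_le_state VS iT (ker_same _) (beta_same _)) _.
exact: dist_state_forget_init (ltnW iT).
Qed.

End ForgetInit.

Section ForgetTerm.
Variables S S' : chain.
Hypotheses (VS : admissible S) (VS' : admissible S').
Hypotheses (eG : ker S = ker S') (eU : init S = init S').

Let ker_same t : ker S t = ker S' t. Proof. by rewrite eG. Qed.

Lemma alpha_same j : alpha S j = alpha S' j.
Proof. by rewrite /alpha eG eU. Qed.

Lemma dist_state_forget_term k : (k <= T)%N -> dist_state S S' (T - k) <= 2 * (1 - c) ^+ k.
Proof.
elim: k => [|k IH] kT; first by rewrite expr0 mulr1 subn0 dist_state_le2.
have jT : (T - k.+1 < T)%N by rewrite ltn_subrL (leq_ltn_trans _ kT).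
apply: le_trans (backward_contraction VS VS' jT (ker_same _) (alpha_same _)) _.
by rewrite subnSK // exprS mulrCA ler_wpM2l ?subr1c_ge0 // IH // ltnW.
Qed.

Lemma dist_pair_forget_term i : (i < T)%N -> dist_pair S S' i <= 2 * (1 - c) ^+ (T - i.+1).
Proof.
move=> iT; apply: le_trans (dist_pair_le_stateS VS (ker_same _) (alpha_same _)) _.
by have := dist_state_forget_term (leq_subr i.+1 T); rewrite subKn.
Qed.

End ForgetTerm.

Section Congruence.
Variables S1 S2 : chain.
Hypotheses (eu : init S1 = init S2) (ev : term S1 = term S2).
Hypothesis eG : forall t : nat, (0 < t <= T)%N -> ker S1 t%:Z = ker S2 t%:Z.

Lemma alpha_congr j : (j <= T)%N -> alpha S1 j = alpha S2 j.
Proof.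
move=> jT; rewrite /alpha eu; apply: eq_forward => k kj.
by rewrite -intS eG // (leq_trans kj jT).
Qed.

Lemma beta_congr j : beta S1 j = beta S2 j.
Proof.
rewrite /beta ev; apply: eq_backward => k kj.
by rewrite -PoszD eG // addSn -ltn_subRL.
Qed.

Lemma pair_weight_congr i : (i < T)%N -> pair_weight S1 i = pair_weight S2 i.
Proof. by move=> iT; rewrite /pair_weight alpha_congr ?(ltnW iT) // beta_congr eG. Qed.

Lemma norm_const_congr : norm_const S1 = norm_const S2.
Proof. by rewrite /norm_const alpha_congr // beta_congr. Qed.

Lemma post_next_congr i : (i < T)%N -> post_next S1 i = post_next S2 i.
Proof. by move=> iT; rewrite /post_next norm_const_congr pair_weight_congr. Qed.

Lemma post_prev_congr i : (i < T)%N -> post_prev S1 i = post_prev S2 i.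
Proof. by move=> iT; rewrite /post_prev norm_const_congr pair_weight_congr. Qed.

End Congruence.

Definition rel_close (e : R) (G G' : kernel R O) := forall t, exists rho kap,
  [/\ 0 < kap, rho <= e * kap,
      forall x y b, `|G' t x y b - G t x y b| <= rho * G t x y b &
      forall x y b, kap * G t x y b <= G' t x y b].

Section Hybrid.
Variables (G G' : kernel R O) (u v : O -> R) (e : R).
Hypotheses (DG : doeblin G) (DG' : doeblin G').
Hypotheses (u0 : forall x, 0 <= u x) (up : 0 < \sum_x u x) (vp : forall x, 0 < v x).
Hypotheses (e0 : 0 <= e) (GG' : rel_close e G G').

Definition hybrid (m : nat) := Chain (fun t => if t <= m%:Z then G' t else G t) u v.

Lemma hybrid_admissible m : admissible (hybrid m).
Proof. by split => //= t; case: ifP => _; [apply: DG' | apply: DG]. Qed.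

Lemma ker_hybrid_le m t : (t <= m)%N -> ker (hybrid m) t%:Z = ker (hybrid m.+1) t%:Z.
Proof. by move=> tm; rewrite /= !lez_nat tm (leq_trans tm). Qed.

Lemma ker_hybrid_gt m t : (m.+1 < t)%N -> ker (hybrid m) t%:Z = ker (hybrid m.+1) t%:Z.
Proof. by move=> mt; rewrite /= !lez_nat (ltn_geF mt) (ltn_geF (ltn_trans (ltnSn m) mt)). Qed.

Lemma alpha_hybrid m j : (j <= m)%N -> alpha (hybrid m) j = alpha (hybrid m.+1) j.
Proof.
move=> jm; apply: eq_forward => k kj.
by rewrite -intS ker_hybrid_le // (leq_trans kj jm).
Qed.

Lemma beta_hybrid m j : (m < j)%N -> beta (hybrid m) j = beta (hybrid m.+1) j.
Proof.
move=> mj; apply: eq_backward => k _.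
by rewrite -PoszD ker_hybrid_gt // addSn ltnS (leq_trans mj) ?leq_addr.
Qed.

Lemma dist_pair_hybrid m : (m < T)%N -> dist_pair (hybrid m) (hybrid m.+1) m <= 2 * e.
Proof.
move=> mT; have [rho [kap [kp rk Hr Hk]]] := GG' m.+1%:Z.
have e1 : ker (hybrid m) m.+1%:Z = G m.+1%:Z by rewrite /= lez_nat ltnn.
have e2 : ker (hybrid m.+1) m.+1%:Z = G' m.+1%:Z by rewrite /= lexx.
apply: le_trans (dist_pair_perturb (hybrid_admissible m) mT (alpha_hybrid (leqnn m))
  (beta_hybrid (ltnSn m)) kp _ _) _; rewrite ?e1 ?e2 //.
by rewrite -mulrA ler_wpM2l // ler_pdivrMr.
Qed.

Lemma dist_state_hybrid_after m k : (m < T)%N -> (m.+1 + k <= T)%N ->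
  dist_state (hybrid m) (hybrid m.+1) (m.+1 + k) <= 2 * e * (1 - c) ^+ k.
Proof.
move=> mT; elim: k => [|k IH] hk.
  rewrite addn0 expr0 mulr1.
  exact: le_trans (dist_stateS_le_pair (hybrid m) (hybrid m.+1) m) (dist_pair_hybrid mT).
have jT : (m.+1 + k < T)%N by rewrite -addnS.
rewrite addnS; apply: le_trans (dist_stateS_le_l1_next _ _ _) _.
have kerE : ker (hybrid m) (m.+1 + k).+1%:Z = ker (hybrid m.+1) (m.+1 + k).+1%:Z.
  by rewrite ker_hybrid_gt // ltnS leq_addr.
have betaE' : beta (hybrid m) (m.+1 + k).+1 = beta (hybrid m.+1) (m.+1 + k).+1.
  by rewrite beta_hybrid // ltnS ltnW // ltnS leq_addr.
apply: le_trans (forward_contraction (hybrid_admissible m) (hybrid_admissible m.+1) jT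
  kerE betaE') _.
by rewrite exprS mulrCA ler_wpM2l ?subr1c_ge0 // IH // ltnW.
Qed.

Lemma dist_state_hybrid_before m k : (m < T)%N -> (k <= m)%N ->
  dist_state (hybrid m) (hybrid m.+1) (m - k) <= 2 * e * (1 - c) ^+ k.
Proof.
move=> mT; elim: k => [|k IH] hk.
  rewrite subn0 expr0 mulr1.
  exact: le_trans (dist_state_le_pair (hybrid m) (hybrid m.+1) mT) (dist_pair_hybrid mT).
have jT : (m - k.+1 < T)%N by apply: leq_ltn_trans mT; apply: leq_subr.
have kerE : ker (hybrid m) (m - k.+1).+1%:Z = ker (hybrid m.+1) (m - k.+1).+1%:Z.
  by rewrite ker_hybrid_le // subnSK // leq_subr.
apply: le_trans (backward_contraction (hybrid_admissible m) (hybrid_admissible m.+1) jT kerE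
  (alpha_hybrid (leq_subr _ _))) _.
by rewrite subnSK // exprS mulrCA ler_wpM2l ?subr1c_ge0 // IH // ltnW.
Qed.

Lemma dist_pair_hybrid_before m i : (m < T)%N -> (i < m)%N ->
  dist_pair (hybrid m) (hybrid m.+1) i <= 2 * e * decay (1 - c) m i.
Proof.
move=> mT im; rewrite /decay leqNgt im /=.
apply: le_trans (dist_pair_le_stateS (hybrid_admissible m) (ker_hybrid_le im)
  (alpha_hybrid (ltnW im))) _.
by have := dist_state_hybrid_before mT (leq_subr i.+1 m); rewrite subKn.
Qed.

Lemma dist_state_hybrid_after_pred m i : (m < i)%N -> (i < T)%N ->
  dist_state (hybrid m) (hybrid m.+1) i <= 2 * e * (1 - c) ^+ (i - m.+1).
Proof.
move=> mi iT; have hk : (m.+1 + (i - m.+1) <= T)%N by rewrite subnKC // ltnW.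
by have := dist_state_hybrid_after (ltn_trans mi iT) hk; rewrite subnKC.
Qed.

Lemma l1_next_hybrid m i : (m < T)%N -> (i < T)%N ->
  l1 (post_next (hybrid m) i) (post_next (hybrid m.+1) i) <= 2 * e * decay (1 - c) m i.
Proof.
move=> mT iT; have hp := l1_next_le_pair (hybrid m) (hybrid m.+1) i.
move: hp; case: (ltngtP i m) => [im|mi|->] hp.
- exact: le_trans hp (dist_pair_hybrid_before mT im).
- apply: le_trans (forward_contraction (hybrid_admissible m) (hybrid_admissible m.+1) iT
    (ker_hybrid_gt (mi : (m.+1 < i.+1)%N)) (beta_hybrid (ltnW mi : (m < i.+1)%N))) _.
  rewrite /decay (ltnW mi) -(subnSK mi) exprS mulrCA ler_wpM2l ?subr1c_ge0 //.
  exact: dist_state_hybrid_after_pred.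
- by rewrite decay_diag mulr1; apply: le_trans hp (dist_pair_hybrid mT).
Qed.

Lemma l1_prev_hybrid m i : (m < T)%N -> (i < T)%N ->
  l1 (post_prev (hybrid m) i) (post_prev (hybrid m.+1) i)
  <= 2 * e * (decay (1 - c) m i.-1 + decay (1 - c) m i).
Proof.
move=> mT iT; have hp := l1_prev_le_pair (hybrid m) (hybrid m.+1) i.
have e2 : 0 <= 2 * e by rewrite mulr_ge0.
have d0 j : 0 <= decay (1 - c) m j by rewrite decay_ge0 ?subr1c_ge0.
rewrite mulrDr; move: hp; case: (ltngtP i m) => [im|mi|->] hp.
- apply: le_trans hp (le_trans (dist_pair_hybrid_before mT im) _).
  by rewrite lerDr mulr_ge0.
- apply: le_trans hp (le_trans (dist_pair_le_state (hybrid_admissible m) iT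
    (ker_hybrid_gt (mi : (m.+1 < i.+1)%N)) (beta_hybrid (ltnW mi : (m < i.+1)%N))) _).
  rewrite decay_pred //; apply: le_trans (dist_state_hybrid_after_pred mi iT) _.
  by rewrite lerDl mulr_ge0.
- apply: le_trans hp (le_trans (dist_pair_hybrid mT) _).
  by rewrite decay_diag mulr1 lerDr mulr_ge0.
Qed.

Lemma ker_hybrid0 t : (0 < t <= T)%N -> ker (Chain G u v) t%:Z = ker (hybrid 0) t%:Z.
Proof. by case/andP=> t0 _; rewrite /= lez_nat leqNgt t0. Qed.

Lemma ker_hybridT t : (0 < t <= T)%N -> ker (Chain G' u v) t%:Z = ker (hybrid T) t%:Z.
Proof. by case/andP=> _ tT; rewrite /= lez_nat tT. Qed.

Lemma sum_decay_c i : (i < T)%N -> \sum_(m < T) decay (1 - c) m i <= 2 / c.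
Proof.
move=> iT; have hx : 0 <= 1 - c < 1 by rewrite subr1c_ge0 /= ltrBlDr ltrDl.
by have := sum_decay_le hx iT; rewrite subKr.
Qed.

Lemma l1_next_perturb i : (i < T)%N ->
  l1 (post_next (Chain G u v) i) (post_next (Chain G' u v) i) <= 2 * (2 * e / c).
Proof.
move=> iT.
rewrite (post_next_congr (S1 := Chain G u v) (S2 := hybrid 0) erefl erefl ker_hybrid0 iT).
rewrite (post_next_congr (S1 := Chain G' u v) (S2 := hybrid T) erefl erefl ker_hybridT iT).
have tele n : (n <= T)%N -> l1 (post_next (hybrid 0) i) (post_next (hybrid n) i)
    <= 2 * e * \sum_(m < n) decay (1 - c) m i.
  elim: n => [|n IH] nT; first by rewrite l1_refl big_ord0 mulr0.
  apply: le_trans (l1_triangle _ (post_next (hybrid n) i) _) _.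
  rewrite big_ord_recr mulrDr; apply: lerD; first exact: IH (ltnW nT).
  exact: l1_next_hybrid.
apply: le_trans (tele T (leqnn T)) _.
rewrite (_ : 2 * (2 * e / c) = 2 * e * (2 / c)); last by ring.
by rewrite ler_wpM2l ?mulr_ge0 ?sum_decay_c.
Qed.

Lemma l1_prev_perturb i : (i < T)%N ->
  l1 (post_prev (Chain G u v) i) (post_prev (Chain G' u v) i) <= 2 * (4 * e / c).
Proof.
move=> iT.
rewrite (post_prev_congr (S1 := Chain G u v) (S2 := hybrid 0) erefl erefl ker_hybrid0 iT).
rewrite (post_prev_congr (S1 := Chain G' u v) (S2 := hybrid T) erefl erefl ker_hybridT iT).
have tele n : (n <= T)%N -> l1 (post_prev (hybrid 0) i) (post_prev (hybrid n) i)
    <= 2 * e * \sum_(m < n) (decay (1 - c) m i.-1 + decay (1 - c) m i).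
  elim: n => [|n IH] nT; first by rewrite l1_refl big_ord0 mulr0.
  apply: le_trans (l1_triangle _ (post_prev (hybrid n) i) _) _.
  rewrite big_ord_recr mulrDr; apply: lerD; first exact: IH (ltnW nT).
  exact: l1_prev_hybrid.
apply: le_trans (tele T (leqnn T)) _.
rewrite (_ : 2 * (4 * e / c) = 2 * e * (2 / c + 2 / c)); last by ring.
rewrite big_split ler_wpM2l ?mulr_ge0 //; apply: lerD; apply: sum_decay_c => //.
exact: leq_ltn_trans (leq_pred i) iT.
Qed.

End Hybrid.

Section Stability.
Variables (G G' : kernel R O) (u v u' v' : O -> R) (e : R).
Hypotheses (DG : doeblin G) (DG' : doeblin G').
Hypotheses (u0 : forall x, 0 <= u x) (up : 0 < \sum_x u x) (vp : forall x, 0 < v x).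
Hypotheses (u'0 : forall x, 0 <= u' x) (u'p : 0 < \sum_x u' x) (v'p : forall x, 0 < v' x).
Hypotheses (e0 : 0 <= e) (GG' : rel_close e G G').

(* Change in turn the initial weights, the terminal weights and the kernel. *)
Theorem l1_next_stability i : (i < T)%N ->
  l1 (post_next (Chain G u v) i) (post_next (Chain G' u' v') i)
  <= 2 * ((1 - c) ^+ i + (1 - c) ^+ (T - i.+1) + 2 * e / c).
Proof.
move=> iT; apply: le_trans (l1_triangle _ (post_next (Chain G u' v) i) _) _.
rewrite !mulrDr -addrA; apply: lerD; first exact: l1_next_forget_init.
apply: le_trans (l1_triangle _ (post_next (Chain G u' v') i) _) _.
apply: lerD; last exact: l1_next_perturb.
apply: le_trans (l1_next_le_pair _ _ _) _.
exact: dist_pair_forget_term.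
Qed.

Theorem l1_prev_stability i : (i < T)%N ->
  l1 (post_prev (Chain G u v) i) (post_prev (Chain G' u' v') i)
  <= 2 * ((1 - c) ^+ i + (1 - c) ^+ (T - i.+1) + 4 * e / c).
Proof.
move=> iT; apply: le_trans (l1_triangle _ (post_prev (Chain G u' v) i) _) _.
rewrite !mulrDr -addrA; apply: lerD; first exact: l1_prev_forget_init.
apply: le_trans (l1_triangle _ (post_prev (Chain G u' v') i) _) _.
apply: lerD; last exact: l1_prev_perturb.
apply: le_trans (l1_prev_le_pair _ _ _) _.
exact: dist_pair_forget_term.
Qed.

End Stability.
End Smoother.

Section Paths.
Variables (R : realFieldType) (O : finType).

Definition fcons (X : finType) n (x : X) (f : {ffun 'I_n -> X}) : {ffun 'I_n.+1 -> X} :=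
  [ffun i => if unlift ord0 i is Some j then f j else x].

Lemma fcons0 (X : finType) n (x : X) (f : {ffun 'I_n -> X}) : fcons x f ord0 = x.
Proof. by rewrite ffunE unlift_none. Qed.

Lemma fconsS (X : finType) n (x : X) (f : {ffun 'I_n -> X}) j : fcons x f (lift ord0 j) = f j.
Proof. by rewrite ffunE liftK. Qed.

Lemma sum_ffunS (X : finType) n (F : {ffun 'I_n.+1 -> X} -> R) :
  \sum_f F f = \sum_x \sum_(f : {ffun 'I_n -> X}) F (fcons x f).
Proof.
rewrite (pair_bigA _ (fun x f => F (fcons x f))) /=.
rewrite (reindex (fun p : X * {ffun 'I_n -> X} => fcons p.1 p.2)) //=.
exists (fun o : {ffun 'I_n.+1 -> X} => (o ord0, [ffun j => o (lift ord0 j)])) => [[x f] _|o _] /=.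
  by rewrite fcons0; congr (_, _); apply/ffunP => j; rewrite ffunE fconsS.
by apply/ffunP => i; rewrite ffunE; case: unliftP => [j ->|->]; rewrite ?ffunE.
Qed.

Lemma inordS_lift n j : (j <= n)%N -> (inord j.+1 : 'I_n.+2) = lift ord0 (inord j : 'I_n.+1).
Proof. by move=> jn; apply/val_inj; rewrite /= /bump /= add1n !inordK. Qed.

Definition path_weight (G : kernel R O) (f : O -> R) (t0 : int) (N : nat)
    (o : {ffun 'I_N.+1 -> O}) (b : {ffun 'I_N -> bool}) :=
  f (o ord0) * \prod_(j < N) G (t0 + j%:Z) (o (inord j)) (o (inord j.+1)) (b j).

Lemma path_weight_fcons G f t0 N x (o : {ffun 'I_N.+1 -> O}) b0 (b : {ffun 'I_N -> bool}) :
  path_weight G f t0 (fcons x o) (fcons b0 b)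
  = f x * G t0 x (o ord0) b0 * path_weight G (fun=> 1) (t0 + 1) o b.
Proof.
rewrite /path_weight big_ord_recl fcons0 mul1r -!mulrA; congr (_ * _).
have inord0 m : (inord 0 : 'I_m.+1) = ord0 by apply/val_inj; rewrite /= inordK.
rewrite addr0 inord0 fcons0 (inordS_lift (j := 0)) // fconsS inord0 fcons0; congr (_ * _).
apply: eq_bigr => j _; rewrite fconsS lift0 addr1_natS.
rewrite (inordS_lift (j := j)) ?(ltnW (ltn_ord j)) // (inordS_lift (j := j.+1)) //.
by rewrite !fconsS.
Qed.

Lemma sum_path_weightS G f t0 N :
  \sum_(o : {ffun 'I_N.+2 -> O}) \sum_b path_weight G f t0 o b
  = \sum_(o : {ffun 'I_N.+1 -> O}) \sum_b path_weight G (kstep G t0 f) (t0 + 1) o b.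
Proof.
transitivity (\sum_x \sum_(o : {ffun 'I_N.+1 -> O}) \sum_b0 \sum_(b : {ffun 'I_N -> bool})
    f x * G t0 x (o ord0) b0 * path_weight G (fun=> 1) (t0 + 1) o b).
  rewrite sum_ffunS; apply: eq_bigr => x _; apply: eq_bigr => o _.
  by rewrite sum_ffunS; apply: eq_bigr => b0 _; apply: eq_bigr => b _; rewrite path_weight_fcons.
rewrite exchange_big /=; apply: eq_bigr => o _.
under eq_bigr do rewrite exchange_big /=.
rewrite exchange_big /=; apply: eq_bigr => b _.
rewrite /path_weight mul1r /kstep mulr_suml; apply: eq_bigr => x _.
by rewrite mulr_suml.
Qed.

Lemma sum_path_weight G f t0 N :
  \sum_(ob : {ffun 'I_N.+1 -> O} * {ffun 'I_N -> bool}) path_weight G f t0 ob.1 ob.2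
  = \sum_x f x * backward G (fun=> 1) t0 N x.
Proof.
rewrite -(pair_bigA _ (fun o b => path_weight G f t0 o b)).
elim: N f t0 => [|N IH] f t0.
  rewrite sum_ffunS; apply: eq_bigr => x _; rewrite mulr1.
  under eq_bigr do under eq_bigr do rewrite /path_weight big_ord0 mulr1 fcons0.
  by rewrite !sumr_const !card_ffun !card_ord !expn0 !mulr1n.
by rewrite sum_path_weightS IH -(sum_forward_backward G f _ t0 1 N).
Qed.

(* Conditioning the path on an event at time [tt] amounts to zeroing the kernel at
   time [tt] outside that event. *)
Definition kernel_restrict (G : kernel R O) (tt : int) (phi : O -> O -> bool -> bool) :
    kernel R O :=
  fun t x y b => G t x y b * ((t == tt) ==> phi x y b)%:R.

Lemma kernel_restrict_off G tt phi t : t != tt -> kernel_restrict G tt phi t = G t.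
Proof.
move=> ne; apply: funext => x; apply: funext => y; apply: funext => b.
by rewrite /kernel_restrict (negbTE ne) mulr1.
Qed.

Lemma sum_path_weight_restrict G tt phi f t0 N :
  \sum_(ob : {ffun 'I_N.+1 -> O} * {ffun 'I_N -> bool} |
      [forall j : 'I_N, (t0 + j%:Z == tt) ==> phi (ob.1 (inord j)) (ob.1 (inord j.+1)) (ob.2 j)])
    path_weight G f t0 ob.1 ob.2
  = \sum_x f x * backward (kernel_restrict G tt phi) (fun=> 1) t0 N x.
Proof.
rewrite -sum_path_weight big_mkcond /=; apply: eq_bigr => ob _.
rewrite /path_weight /kernel_restrict big_split /= mulrA; case: ifP => [/forallP H|].
  by rewrite [X in _ = _ * X]big1 ?mulr1 // => j _; rewrite H.
move/negbT; rewrite negb_forall => /existsP[j Hj].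
by rewrite [X in _ = _ * X](bigD1 j) //= (negbTE Hj) mul0r mulr0.
Qed.

Lemma sum_backward_restrict G f t0 m n phi tt : tt = t0 + m%:Z ->
  \sum_x f x * backward (kernel_restrict G tt phi) (fun=> 1) t0 (m + n.+1) x
  = \sum_x forward G f t0 m x
      * \sum_y \sum_b G tt x y b * backward G (fun=> 1) (tt + 1) n y * (phi x y b)%:R.
Proof.
move=> ett; rewrite -sum_forward_backward -ett.
rewrite (@eq_forward _ _ _ G); last first.
  by move=> k km; apply: kernel_restrict_off; rewrite ett; apply/negP => /eqP; lia.
apply: eq_bigr => x _; congr (_ * _) => /=.
rewrite (@eq_backward _ _ _ G); last first.
  by move=> k _; apply: kernel_restrict_off; apply/negP => /eqP; lia.
by apply: eq_bigr => y _; apply: eq_bigr => b _; rewrite /kernel_restrict eqxx mulrAC.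
Qed.

End Paths.

Section Indicators.
Variables (R : realFieldType) (O : finType).

Lemma sum_backward_restrict_next (G : kernel R O) f t0 N m n tt o' b' :
  N = (m + n.+1)%N -> tt = t0 + m%:Z ->
  \sum_x f x
    * backward (kernel_restrict G tt (fun _ y b => (y == o') && (b == b'))) (fun=> 1) t0 N x
  = \sum_x forward G f t0 m x * (G tt x o' b' * backward G (fun=> 1) (tt + 1) n o').
Proof.
move=> -> ett; rewrite (sum_backward_restrict _ _ _ _ ett); apply: eq_bigr => x _.
congr (_ * _); rewrite (bigD1 o') //= [X in _ + X]big1 ?addr0; last first.
  by move=> y /negbTE yo; apply: big1 => b _; rewrite yo mulr0.
by rewrite (bigD1 b') //= !eqxx mulr1 big1 ?addr0 // => b /negbTE bb; rewrite bb mulr0.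
Qed.

Lemma sum_backward_restrict_prev (G : kernel R O) f t0 N m n tt o' b' :
  N = (m + n.+1)%N -> tt = t0 + m%:Z ->
  \sum_x f x
    * backward (kernel_restrict G tt (fun x _ b => (x == o') && (b == b'))) (fun=> 1) t0 N x
  = forward G f t0 m o' * \sum_y G tt o' y b' * backward G (fun=> 1) (tt + 1) n y.
Proof.
move=> -> ett; rewrite (sum_backward_restrict _ _ _ _ ett) (bigD1 o') //= [X in _ + X]big1 ?addr0.
  congr (_ * _); apply: eq_bigr => y _.
  by rewrite (bigD1 b') //= !eqxx mulr1 big1 ?addr0 // => b /negbTE bb; rewrite bb andbF mulr0.
move=> x /negbTE xo; rewrite big1 ?mulr0 // => y _.
by rewrite big1 // => b _; rewrite xo mulr0.
Qed.

End Indicators.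

Section Smoothing.
Variables (R : realType) (St A O : finType) (nh nl nb : nat).
Variables (pihi : 'rV[R]_nh -> St -> O -> R) (pilo : 'rV[R]_nl -> St -> O -> A -> R)
          (pib : 'rV[R]_nb -> St -> O -> bool -> R) (P : St -> A -> St -> R) (zeta : R).
Variables (s : int -> St) (a : int -> A).
Hypothesis P_obs_gt0 : forall t : int, 0 < P (s t) (a t) (s (t + 1)).

Definition obs_kernel (th : param R nh nl nb) : kernel R O :=
  fun t x y b => hfun pihi pilo pib zeta th x (s t) (a t) y b.

Lemma sum_wpath_cancel th init t0 N (Q : pred ({ffun 'I_N.+1 -> O} * {ffun 'I_N -> bool})) :
  (\sum_(ob | Q ob) wpath pihi pilo pib P zeta th init t0 s a ob.1 ob.2)
    / (\sum_(ob : {ffun 'I_N.+1 -> O} * {ffun 'I_N -> bool})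
         wpath pihi pilo pib P zeta th init t0 s a ob.1 ob.2)
  = (\sum_(ob | Q ob) path_weight (obs_kernel th) init t0 ob.1 ob.2)
    / (\sum_(ob : {ffun 'I_N.+1 -> O} * {ffun 'I_N -> bool})
         path_weight (obs_kernel th) init t0 ob.1 ob.2).
Proof.
rewrite /wpath -!mulr_suml invfM mulrACA divff ?mulr1 // gt_eqF //.
by apply: prodr_gt0 => j _; apply: P_obs_gt0.
Qed.

Lemma smooth_restrict th init t0 N t o' b' :
  smooth pihi pilo pib P zeta th init t0 N s a t o' b'
  = (\sum_x init x * backward (kernel_restrict (obs_kernel th) t
        (fun _ y b => (y == o') && (b == b'))) (fun=> 1) t0 N x)
    / (\sum_x init x * backward (obs_kernel th) (fun=> 1) t0 N x).
Proof. by rewrite -sum_path_weight_restrict -sum_path_weight /smooth sum_wpath_cancel. Qed.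

Lemma smooth_tilde_restrict th init t0 N t o' b' :
  smooth_tilde pihi pilo pib P zeta th init t0 N s a t o' b'
  = (\sum_x init x * backward (kernel_restrict (obs_kernel th) t
        (fun x _ b => (x == o') && (b == b'))) (fun=> 1) t0 N x)
    / (\sum_x init x * backward (obs_kernel th) (fun=> 1) t0 N x).
Proof. by rewrite -sum_path_weight_restrict -sum_path_weight /smooth_tilde sum_wpath_cancel. Qed.

Variable T : nat.

Definition chain_mu th (mu : St -> O -> R) := Chain (obs_kernel th) (mu (s 1)) (fun=> 1).

(* The window [1-k, T+k] of [gamma_k] is folded into a chain on [1..T]: its first
   [k] steps go into the initial weights and its last [k] steps into the terminal ones. *)
Definition chain_k th (nu : O -> St -> R) (k : nat) :=
  Chain (obs_kernel th) (forward (obs_kernel th) (fun o => nu o (s (1 - k%:Z))) (1 - k%:Z) k)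
        (backward (obs_kernel th) (fun=> 1) T.+1%:Z k).

Lemma norm_const_mu th mu :
  \sum_x mu (s 1) x * backward (obs_kernel th) (fun=> 1) 1 T x = norm_const T (chain_mu th mu).
Proof. by rewrite /norm_const /alpha /beta subn0. Qed.

Lemma norm_const_k th nu k :
  \sum_x nu x (s (1 - k%:Z)) * backward (obs_kernel th) (fun=> 1) (1 - k%:Z) (T + 2 * k) x
  = norm_const T (chain_k th nu k).
Proof.
rewrite (_ : (T + 2 * k)%N = (k + (T + k))%N); last by lia.
by rewrite -sum_forward_backward subrK backwardD /norm_const /alpha /beta subn0 -intS.
Qed.

Lemma gamma_mu_post th mu i : (i < T)%N ->
  gamma_mu pihi pilo pib P zeta th mu T s a i.+1%:Z = post_next T (chain_mu th mu) i.
Proof.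
move=> iT; apply/funext => o'; apply/funext => b'.
rewrite /gamma_mu smooth_restrict norm_const_mu.
rewrite (@sum_backward_restrict_next _ _ _ _ _ _ i (T - i.+1)); [|lia|lia].
rewrite /post_next /pair_weight /alpha /beta (_ : i.+1%:Z + 1 = i.+2%:Z); last by lia.
by congr (_ / _); apply: eq_bigr => x _; rewrite mulrA.
Qed.

Lemma gammat_mu_post th mu i : (i < T)%N ->
  gammat_mu pihi pilo pib P zeta th mu T s a i.+1%:Z = post_prev T (chain_mu th mu) i.
Proof.
move=> iT; apply/funext => o'; apply/funext => b'.
rewrite /gammat_mu smooth_tilde_restrict norm_const_mu.
rewrite (@sum_backward_restrict_prev _ _ _ _ _ _ i (T - i.+1)); [|lia|lia].
rewrite /post_prev /pair_weight /alpha /beta (_ : i.+1%:Z + 1 = i.+2%:Z); last by lia.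
by rewrite mulr_sumr; congr (_ / _); apply: eq_bigr => y _; rewrite mulrA.
Qed.

Lemma gamma_k_post th nu k i : (i < T)%N ->
  gamma_k pihi pilo pib P zeta th nu k T s a i.+1%:Z = post_next T (chain_k th nu k) i.
Proof.
move=> iT; apply/funext => o'; apply/funext => b'.
rewrite /gamma_k smooth_restrict norm_const_k.
rewrite (@sum_backward_restrict_next _ _ _ _ _ _ (k + i) (T - i.+1 + k)); [|lia|lia].
rewrite forwardD subrK backwardD (_ : i.+1%:Z + 1 + (T - i.+1)%:Z = T.+1%:Z); last by lia.
rewrite /post_next /pair_weight /alpha /beta (_ : i.+1%:Z + 1 = i.+2%:Z); last by lia.
by congr (_ / _); apply: eq_bigr => x _; rewrite mulrA.
Qed.

Lemma gammat_k_post th nu k i : (i < T)%N ->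
  gammat_k pihi pilo pib P zeta th nu k T s a i.+1%:Z = post_prev T (chain_k th nu k) i.
Proof.
move=> iT; apply/funext => o'; apply/funext => b'.
rewrite /gammat_k smooth_tilde_restrict norm_const_k.
rewrite (@sum_backward_restrict_prev _ _ _ _ _ _ (k + i) (T - i.+1 + k)); [|lia|lia].
rewrite forwardD subrK backwardD (_ : i.+1%:Z + 1 + (T - i.+1)%:Z = T.+1%:Z); last by lia.
rewrite /post_prev /pair_weight /alpha /beta (_ : i.+1%:Z + 1 = i.+2%:Z); last by lia.
by rewrite mulr_sumr; congr (_ / _); apply: eq_bigr => y _; rewrite mulrA.
Qed.

End Smoothing.

Section ObservationKernel.
Variables (R : realType) (St A O : finType) (nh nl nb : nat).
Variables (Th : set 'rV[R]_nh) (Tl : set 'rV[R]_nl) (Tb : set 'rV[R]_nb).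
Variables (pihi : 'rV[R]_nh -> St -> O -> R) (pilo : 'rV[R]_nl -> St -> O -> A -> R)
          (pib : 'rV[R]_nb -> St -> O -> bool -> R) (zeta epsb : R).
Variables (s : int -> St) (a : int -> A).
Hypotheses (zeta_gt0 : 0 < zeta) (epsb_gt0 : 0 < epsb).
Hypothesis pilo_gt0 : forall th, inTheta Th Tl Tb th -> forall st o a', 0 < pilo (th_lo th) st o a'.

Local Notation h := (hfun pihi pilo pib zeta).
Local Notation G := (obs_kernel pihi pilo pib zeta s a).

Lemma obs_kernel_doeblin (pbar : St -> O -> bool -> R) th : inTheta Th Tl Tb th ->
  (forall st oprev o b,
     0 < epsb * zeta * pbar st o b /\
     epsb * zeta * pbar st o b
       <= pib (th_b th) st oprev b * pibar_hi pihi zeta (th_hi th) st oprev b o /\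
     pib (th_b th) st oprev b * pibar_hi pihi zeta (th_hi th) st oprev b o
       <= epsb^-1 * #|O|%:R * pbar st o b) ->
  doeblin (epsb ^+ 2 * zeta / #|O|%:R) (G th).
Proof.
move=> Hth Hpbar t.
exists (fun y b => epsb^-1 * #|O|%:R * pbar (s t) y b * pilo (th_lo th) (s t) y (a t)); split.
  move=> y b; have [pb_gt0 _] := Hpbar (s t) y y b.
  have O_gt0 : (0 < #|O|)%N by apply/card_gt0P; exists y.
  have pb : 0 < pbar (s t) y b by move: pb_gt0; rewrite pmulr_rgt0 // mulr_gt0.
  by rewrite !mulr_gt0 ?invr_gt0 ?ltr0n ?pilo_gt0.
move=> x y b; have [pb_gt0 [lo hi]] := Hpbar (s t) x y b.
have O_gt0 : 0 < #|O|%:R :> R by rewrite ltr0n; apply/card_gt0P; exists y.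
rewrite /obs_kernel /hfun
  (_ : _ * (_ * _ * _ * _) = epsb * zeta * pbar (s t) y b * pilo (th_lo th) (s t) y (a t)).
  by split; apply: ler_wpM2r => //; apply: ltW; apply: pilo_gt0.
by field; rewrite !gt_eqF.
Qed.

Lemma hfun_le_hmax th st a' x y b : h th x st a' y b <= hmax pihi pilo pib zeta th st a'.
Proof. exact: (le_bigmax _ (fun p : O * O * bool => h th p.1.1 st a' p.1.2 p.2) (x, y, b)). Qed.

Lemma hmin_le_hfun th st a' x y b : hmin pihi pilo pib zeta th st a' <= h th x st a' y b.
Proof. exact: (bigmin_le _ (x, y, b) (fun p : O * O * bool => h th p.1.1 st a' p.1.2 p.2)). Qed.

Lemma hmin_gt0 th st a' : (forall x y b, 0 < h th x st a' y b) -> O ->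
  0 < hmin pihi pilo pib zeta th st a'.
Proof.
move=> hp o; apply: (big_ind (fun v => 0 < v)) => [|u v hu hv|p _]; last exact: hp.
  exact: lt_le_trans (hp o o true) (hfun_le_hmax _ _ _ _ _ _).
by rewrite lt_min hu hv.
Qed.

Lemma hmax_div_le_zconst th th' st a' :
  0 < hmin pihi pilo pib zeta th st a' -> 0 < hmin pihi pilo pib zeta th' st a' ->
  hmax pihi pilo pib zeta th st a'
    / (hmin pihi pilo pib zeta th st a' * hmin pihi pilo pib zeta th' st a')
  <= zconst pihi pilo pib zeta th th'.
Proof.
move=> hm hm'; apply: le_trans _ (le_bigmax _ (fun p : St * A =>
  Num.max (hmax pihi pilo pib zeta th p.1 p.2) (hmax pihi pilo pib zeta th' p.1 p.2)
  / (hmin pihi pilo pib zeta th p.1 p.2 * hmin pihi pilo pib zeta th' p.1 p.2)) (st, a')).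
by apply: ler_wpM2r; [rewrite invr_ge0 ltW // mulr_gt0 | rewrite /= le_max lexx].
Qed.

Lemma dist2_self (th : param R nh nl nb) : dist2 th th = 0.
Proof. by rewrite /dist2 !big1 ?addr0 ?sqrtr0 // => i _; rewrite subrr expr0n. Qed.

(* The Lipschitz bound gives [|G' - G| <= L d <= (L d / hmin) G], the ratio
   [G' / G >= hmin' / hmax] the lower bound, and [z] bounds [hmax / (hmin hmin')]. *)
Lemma obs_kernel_close th th' L (o : O) :
  kernel_pos (G th) -> kernel_pos (G th') ->
  inTheta Th Tl Tb th -> inTheta Th Tl Tb th' ->
  lip_on pihi pilo pib zeta Th Tl Tb th (dist2 th' th) L ->
  rel_close (zconst pihi pilo pib zeta th th' * L * dist2 th' th) (G th) (G th').
Proof.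
move=> Gp Gp' Hth Hth' [L0 Lip] t.
set d := dist2 th' th; have d0 : 0 <= d by apply: sqrtr_ge0.
set hm := hmin pihi pilo pib zeta th (s t) (a t).
set hm' := hmin pihi pilo pib zeta th' (s t) (a t).
set hM := hmax pihi pilo pib zeta th (s t) (a t).
have hmp : 0 < hm by apply: hmin_gt0 => // x y b; apply: Gp.
have hmp' : 0 < hm' by apply: hmin_gt0 => // x y b; apply: Gp'.
have hMp : 0 < hM := lt_le_trans (Gp t o o true) (hfun_le_hmax _ _ _ _ _ _).
exists (L * d / hm), (hm' / hM); split.
- by rewrite divr_gt0.
- rewrite (_ : L * d / hm = hM / (hm * hm') * (L * d) * (hm' / hM)); last first.
    by field; rewrite !gt_eqF.
  rewrite -(mulrA _ L d); apply: ler_wpM2r; first by rewrite divr_ge0 ?ltW.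
  by apply: ler_wpM2r; [rewrite mulr_ge0 | apply: hmax_div_le_zconst].
- move=> x y b; apply: le_trans (Lip x (s t) (a t) y b th' th Hth' Hth (lexx d) _) _.
    by rewrite dist2_self.
  rewrite -/d (_ : L * d / hm * _ = L * d * (G th t x y b / hm)); last by ring.
  rewrite -[X in X <= _]mulr1; apply: ler_wpM2l; first exact: mulr_ge0.
  by rewrite ler_pdivlMr // mul1r hmin_le_hfun.
- move=> x y b; apply: le_trans (hmin_le_hfun th' _ _ x y b).
  apply: le_trans (ler_wpM2l _ (hfun_le_hmax th (s t) (a t) x y b)) _.
    by rewrite divr_ge0 ?ltW.
  by rewrite divfK ?gt_eqF.
Qed.

End ObservationKernel.

Lemma tv_l1 (R : realType) (O : finType) (f g : O -> bool -> R) : tv f g = 2^-1 * l1 f g.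
Proof. by rewrite /tv sum_pair. Qed.

Section SmoothingStability.
Variables (R : realType) (St A O : finType) (nh nl nb : nat).
Variables (Th : set 'rV[R]_nh) (Tl : set 'rV[R]_nl) (Tb : set 'rV[R]_nb).
Variables (pihi : 'rV[R]_nh -> St -> O -> R) (pilo : 'rV[R]_nl -> St -> O -> A -> R)
          (pib : 'rV[R]_nb -> St -> O -> bool -> R) (P : St -> A -> St -> R) (zeta epsb : R).
Variables (th th' : param R nh nl nb) (nu : O -> St -> R) (mu : St -> O -> R) (k T : nat).
Variables (s : int -> St) (a : int -> A) (L : R).
Hypotheses (zeta_gt0 : 0 < zeta) (epsb_gt0 : 0 < epsb).
Hypothesis pilo_gt0 : forall th, inTheta Th Tl Tb th -> forall st o a', 0 < pilo (th_lo th) st o a'.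
Hypothesis minorization :
  exists pbar : param R nh nl nb -> St -> O -> bool -> R,
    forall th, inTheta Th Tl Tb th -> forall st,
      (forall o b, 0 <= pbar th st o b) /\ \sum_(x : O * bool) pbar th st x.1 x.2 = 1 /\
      forall oprev o b,
        0 < epsb * zeta * pbar th st o b /\
        epsb * zeta * pbar th st o b
          <= pib (th_b th) st oprev b * pibar_hi pihi zeta (th_hi th) st oprev b o /\
        pib (th_b th) st oprev b * pibar_hi pihi zeta (th_hi th) st oprev b o
          <= epsb^-1 * #|O|%:R * pbar th st o b.
Hypotheses (Hth : inTheta Th Tl Tb th) (Hth' : inTheta Th Tl Tb th').
Hypotheses (mu_ge0 : forall o, 0 <= mu (s 1) o) (mu_sum_gt0 : 0 < \sum_o mu (s 1) o).
Hypotheses (nu_ge0 : forall o, 0 <= nu o (s (1 - k%:Z)))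
           (nu_sum_gt0 : 0 < \sum_o nu o (s (1 - k%:Z))).
Hypothesis P_obs_gt0 : forall t : int, 0 < P (s t) (a t) (s (t + 1)).
Hypothesis Lip : lip_on pihi pilo pib zeta Th Tl Tb th (dist2 th' th) L.

Local Notation c := (epsb ^+ 2 * zeta / #|O|%:R).
Local Notation e := (zconst pihi pilo pib zeta th th' * L * dist2 th' th).
Local Notation G := (obs_kernel pihi pilo pib zeta s a).

Let O_inhabited : exists o : O, True := sum_gt0_inhabited mu_sum_gt0.

Let doeblin_G th0 : inTheta Th Tl Tb th0 -> doeblin c (G th0).
Proof.
move=> H0; have [pbar Hpbar] := minorization.
exact (obs_kernel_doeblin s a zeta_gt0 epsb_gt0 pilo_gt0 H0 (fun st => (Hpbar th0 H0 st).2.2)).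
Qed.

Let c_gt0 : 0 < c.
Proof.
have [x0 _] := O_inhabited.
by rewrite !mulr_gt0 ?exprn_gt0 ?invr_gt0 ?ltr0n //; apply/card_gt0P; exists x0.
Qed.

Let c_le1 : c <= 1.
Proof. by have [x0 _] := O_inhabited; apply: doeblin_le1 x0 (doeblin_G Hth). Qed.

Let e_ge0 : 0 <= e.
Proof.
have [L0 _] := Lip; rewrite !mulr_ge0 ?sqrtr_ge0 //.
exact: bigmax_ge_id.
Qed.

Let close : rel_close e (G th) (G th').
Proof.
have [x0 _] := O_inhabited.
exact (obs_kernel_close x0 (doeblin_pos c_gt0 (doeblin_G Hth))
  (doeblin_pos c_gt0 (doeblin_G Hth')) Hth Hth' Lip).
Qed.

Let chain_k_admissible :
  [/\ forall x, 0 <= init (chain_k pihi pilo pib zeta s a T th' nu k) x,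
      0 < \sum_x init (chain_k pihi pilo pib zeta s a T th' nu k) x &
      forall x, 0 < term (chain_k pihi pilo pib zeta s a T th' nu k) x].
Proof.
have Gp := doeblin_pos c_gt0 (doeblin_G Hth').
by split => [x|| x]; [apply: forward_ge0 | apply: forward_sum_gt0 | apply: backward_gt0].
Qed.

Let paper_constant (m : R) : m * #|O|%:R * zconst pihi pilo pib zeta th th' * L / (epsb ^+ 2 * zeta)
  * dist2 th' th = m * e / c.
Proof.
have [x0 _] := O_inhabited.
have O0 : #|O|%:R != 0 :> R by rewrite pnatr_eq0 -lt0n; apply/card_gt0P; exists x0.
by field; rewrite O0 !gt_eqF.
Qed.

Lemma tv_gamma_le i : (i < T)%N ->
  tv (gamma_mu pihi pilo pib P zeta th mu T s a i.+1%:Z)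
     (gamma_k pihi pilo pib P zeta th' nu k T s a i.+1%:Z)
  <= (1 - c) ^+ i + (1 - c) ^+ (T - i.+1)
     + 2 * #|O|%:R * zconst pihi pilo pib zeta th th' * L / (epsb ^+ 2 * zeta) * dist2 th' th.
Proof.
move=> iT; have [u0 up vp] := chain_k_admissible.
rewrite tv_l1 gamma_mu_post // gamma_k_post // paper_constant ler_pdivrMl ?ltr0n //.
exact (l1_next_stability c_gt0 c_le1 (doeblin_G Hth) (doeblin_G Hth') mu_ge0 mu_sum_gt0
  (fun=> ltr01) u0 up vp e_ge0 close iT).
Qed.

Lemma tv_gammat_le i : (0 < i < T)%N ->
  tv (gammat_mu pihi pilo pib P zeta th mu T s a i.+1%:Z)
     (gammat_k pihi pilo pib P zeta th' nu k T s a i.+1%:Z)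
  <= 2 * (1 - c) ^+ i.-1 + (1 - c) ^+ (T - i.+1)
     + 4 * #|O|%:R * zconst pihi pilo pib zeta th th' * L / (epsb ^+ 2 * zeta) * dist2 th' th.
Proof.
case/andP=> i0 iT; have [u0 up vp] := chain_k_admissible.
rewrite tv_l1 gammat_mu_post // gammat_k_post // paper_constant ler_pdivrMl ?ltr0n //.
apply: le_trans (l1_prev_stability c_gt0 c_le1 (doeblin_G Hth) (doeblin_G Hth') mu_ge0 mu_sum_gt0
  (fun=> ltr01) u0 up vp e_ge0 close iT) _.
apply: ler_wpM2l => //; rewrite !lerD2r -{1}(prednK i0) exprS.
apply: ler_wpM2r; first by rewrite exprn_ge0 // subr_ge0.
by have := c_gt0; lra.
Qed.

End SmoothingStability.

Import numFieldNormedType.Exports.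
Local Open Scope classical_set_scope.
Theorem lemma12 (R : realType) (S A O : finType) (nh nl nb : nat)
  (Th : set 'rV[R]_nh) (Tl : set 'rV[R]_nl) (Tb : set 'rV[R]_nb)
  (pihi : 'rV[R]_nh -> S -> O -> R) (pilo : 'rV[R]_nl -> S -> O -> A -> R)
  (pib : 'rV[R]_nb -> S -> O -> bool -> R) (P : S -> A -> S -> R)
  (zeta epsb : R) (thstar : param R nh nl nb) (nustar : O -> S -> R)
  (* Theta = Th x Tl x Tb convex compact *)
  (HTh : compact Th /\ convex_rv Th) (HTl : compact Tl /\ convex_rv Tl)
  (HTb : compact Tb /\ convex_rv Tb)
  (* standing assumption (i) *)
  (Hhi : exists U : set 'rV[R]_nh, open U /\ Th `<=` U /\
     (forall x, U x -> forall s, (forall o, 0 < pihi x s o) /\ \sum_(o : O) pihi x s o = 1) /\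
     (forall s o, C1_on U (fun x => pihi x s o)))
  (Hlo : exists U : set 'rV[R]_nl, open U /\ Tl `<=` U /\
     (forall x, U x -> forall s o, (forall a, 0 < pilo x s o a) /\ \sum_(a : A) pilo x s o a = 1) /\
     (forall s o a, C1_on U (fun x => pilo x s o a)))
  (Hb : exists U : set 'rV[R]_nb, open U /\ Tb `<=` U /\
     (forall x, U x -> forall s o, (forall b, 0 < pib x s o b) /\ \sum_(b : bool) pib x s o b = 1) /\
     (forall s o b, C1_on U (fun x => pib x s o b)))
  (HP : (forall s a s', 0 <= P s a s') /\ (forall s a, \sum_(s' : S) P s a s' = 1))
  (Hzeta : 0 < zeta < 1)
  (* standing assumption (ii) *)
  (Hthstar : inTheta Th Tl Tb thstar)
  (Hnustar : extreme_stationary pihi pilo pib P zeta thstar nustar)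
  (* the constant eps_b *)
  (Heps : 0 < epsb /\
     exists pbar : param R nh nl nb -> S -> O -> bool -> R,
       forall th, inTheta Th Tl Tb th -> forall s,
         (forall o b, 0 <= pbar th s o b) /\ \sum_(x : O * bool) pbar th s x.1 x.2 = 1 /\
         forall oprev o b,
           0 < epsb * zeta * pbar th s o b /\
           epsb * zeta * pbar th s o b
             <= pib (th_b th) s oprev b * pibar_hi pihi zeta (th_hi th) s oprev b o /\
           pib (th_b th) s oprev b * pibar_hi pihi zeta (th_hi th) s oprev b o
             <= epsb^-1 * #|O|%:R * pbar th s o b)
  (th th' : param R nh nl nb) (k : nat) (mu : S -> O -> R) (T : nat)
  (s : int -> S) (a : int -> A) (L : R)
  (Hth : inTheta Th Tl Tb th) (Hth' : inTheta Th Tl Tb th')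
  (Hk : (0 < k)%N)
  (Hmu : forall s1, (forall o, 0 <= mu s1 o) /\ \sum_(o : O) mu s1 o = 1)
  (HT : (2 <= T)%N)
  (* (s_t, a_t)_t is the observation sequence of some omega in Omega *)
  (Homega : forall t : int, 0 < P (s t) (a t) (s (t + 1)))
  (* the conditioning event of gamma^{th'}_{k,.} has positive probability *)
  (Hpos : 0 < \sum_(o : O) nustar o (s (1 - k%:Z)))
  (* L = L_{th, ||th' - th||_2} *)
  (HL : is_L_const pihi pilo pib zeta Th Tl Tb th (dist2 th' th) L) :
  let c := epsb ^+ 2 * zeta / #|O|%:R in
  (forall t : nat, (1 <= t <= T)%N ->
     tv (gamma_mu pihi pilo pib P zeta th mu T s a t%:Z)
        (gamma_k pihi pilo pib P zeta th' nustar k T s a t%:Z)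
     <= (1 - c) ^+ (t - 1) + (1 - c) ^+ (T - t)
        + 2 * #|O|%:R * zconst pihi pilo pib zeta th th' * L / (epsb ^+ 2 * zeta)
          * dist2 th' th) /\
  (forall t : nat, (2 <= t <= T)%N ->
     tv (gammat_mu pihi pilo pib P zeta th mu T s a t%:Z)
        (gammat_k pihi pilo pib P zeta th' nustar k T s a t%:Z)
     <= 2 * (1 - c) ^+ (t - 2) + (1 - c) ^+ (T - t)
        + 4 * #|O|%:R * zconst pihi pilo pib zeta th th' * L / (epsb ^+ 2 * zeta)
          * dist2 th' th).
Proof.
move=> c; rewrite {}/c.
have [epsb_gt0 minorization] := Heps.
have [zeta_gt0 _] := andP Hzeta.
have [U [_ [TlU [pilo_simplex _]]]] := Hlo.
have pilo_gt0 th0 : inTheta Th Tl Tb th0 -> forall st o a', 0 < pilo (th_lo th0) st o a'.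
  by move=> H0 st o a'; have [+ _] := pilo_simplex _ (TlU _ H0.2.1) st o; apply.
have [mu_ge0 mu_sum1] := Hmu (s 1).
have mu_sum_gt0 : 0 < \sum_o mu (s 1) o by rewrite mu_sum1 ltr01.
have [[nu_ge0 _] _] := Hnustar.
have [Lip _] := HL.
split=> -[//|i] /andP[i0 iT].
- by rewrite subn1; apply: (tv_gamma_le zeta_gt0 epsb_gt0 pilo_gt0 minorization Hth Hth'
    mu_ge0 mu_sum_gt0 (fun o => nu_ge0 o _) Hpos Homega Lip).
- by rewrite subn2; apply: (tv_gammat_le zeta_gt0 epsb_gt0 pilo_gt0 minorization Hth Hth'
    mu_ge0 mu_sum_gt0 (fun o => nu_ge0 o _) Hpos Homega Lip); apply/andP.
Qed.
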